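(* Let $\mathcal{A}=(\omega,f)$ and $\mathcal{B}=(\omega,g)$ be computable (2,1):1 structures that are isomorphic, and suppose that the branching functions $\beta_{\mathcal{A}},\beta_{\mathcal{B}}$ and the branch isomorphism functions $iso_{\mathcal{A}}, iso_{\mathcal{B}}$ are all computable. (i) If $a_0\in\omega$ is a non-cyclic element of $\mathcal{A}$ and $b_0\in\omega$ is a non-cyclic element of $\mathcal{B}$ with $Tree_{\mathcal{A}}(a_0)\cong Tree_{\mathcal{B}}(b_0)$, then there is a computable isomorphism from $Tree_{\mathcal{A}}(a_0)$ onto $Tree_{\mathcal{B}}(b_0)$ (i.e. a partial computable function defined on all of $tree_{\mathcal{A}}(a_0)$ whose restriction there is such an isomorphism). (ii) If $c$ is a cyclic element of $\mathcal{A}$ and $d$ is a cyclic element of $\mathcal{B}$ with $exTree_{\mathcal{A}}(c)\cong exTree_{\mathcal{B}}(d)$, then there is a computable isomorphism from $exTree_{\mathcal{A}}(c)$ onto $exTree_{\mathcal{B}}(d)$.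
   Context: A (2,1):1 structure is a pair $\mathcal{A}=(A,f)$ with $A$ a countable set and $f:A\to A$ such that $|f^{-1}(a)|\in\{1,2\}$ for every $a\in A$. It is computable if $A$ is a computable set (here $A=\omega$) and $f$ is a computable function. An element $x$ is cyclic if $f^n(x)=x$ for some $n>0$. For $x\in A$, $tree_{\mathcal{A}}(x)=\{a\in A:\exists n\ge 0\ (f^n(a)=x)\}$, and $Tree_{\mathcal{A}}(x)$ is the directed graph with vertex set $tree_{\mathcal{A}}(x)$ and edge set $\{(a,f(a)): a\in tree_{\mathcal{A}}(x),\ f(a)\in tree_{\mathcal{A}}(x)\}$. If $c$ is a cyclic element lying on a directed cycle with exactly $K$ elements, $extree_{\mathcal{A}}(c)=\{a\in A: \exists n\,[f^n(a)=c \wedge \forall m<n\ (f^{m+K}(a)\neq f^m(a))]\}$ (i.e. $c$ together with the non-cyclic elements whose forward orbit first reaches the cycle at $c$), and $exTree_{\mathcal{A}}(c)$ is the associated directed graph with vertex set $extree_{\mathcal{A}}(c)$ and edges $(a,f(a))$ for $a\in extree_{\mathcal{A}}(c)$, $a\ne c$ (a rooted tree with root $c$). The branching function $\beta_{\mathcal{A}}:A\to\{1,2\}$ is $\beta_{\mathcal{A}}(x)=|f^{-1}(x)|$. The split hair set is $\Lambda_{\mathcal{A}}=\{x:\beta_{\mathcal{A}}(x)=2\}$. The branch isomorphism function $iso_{\mathcal{A}}:\Lambda_{\mathcal{A}}\to\{0,1\}$ is defined, for $x\in\Lambda_{\mathcal{A}}$ with distinct pre-images $x_1,x_2$, by $iso_{\mathcal{A}}(x)=1$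 if $Tree_{\mathcal{A}}(x_1)\cong Tree_{\mathcal{A}}(x_2)$ and $iso_{\mathcal{A}}(x)=0$ otherwise; ''computable'' for $iso_{\mathcal{A}}$ means it is the restriction to $\Lambda_{\mathcal{A}}$ of a partial computable function. *)

From Stdlib Require Import List Arith Classical ClassicalEpsilon.
Import ListNotations.

Inductive prf : Type :=
| PZero : prf
| PSucc : prf
| PProj : nat -> prf
| PComp : prf -> list prf -> prf
| PPrec : prf -> prf -> prf
| PMu   : prf -> prf.

Inductive eval : prf -> list nat -> nat -> Prop :=
| ev_zero : forall xs, eval PZero xs 0
| ev_succ : forall x xs, eval PSucc (x :: xs) (S x)
| ev_proj : forall i xs, i < length xs -> eval (PProj i) xs (nth i xs 0)
| ev_comp : forall f gs xs ys y,
    Forall2 (fun g z => eval g xs z) gs ys ->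
    eval f ys y -> eval (PComp f gs) xs y
| ev_prec0 : forall f g xs y,
    eval f xs y -> eval (PPrec f g) (0 :: xs) y
| ev_precS : forall f g n xs z y,
    eval (PPrec f g) (n :: xs) z -> eval g (n :: z :: xs) y ->
    eval (PPrec f g) (S n :: xs) y
| ev_mu : forall f xs n,
    eval f (n :: xs) 0 ->
    (forall m, m < n -> exists k, eval f (m :: xs) (S k)) ->
    eval (PMu f) xs n.

Definition computable_fun (h : nat -> nat) : Prop :=
  exists e : prf, forall x, eval e [x] (h x).

Definition computable_on (D : nat -> Prop) (h : nat -> nat) : Prop :=
  exists e : prf, forall x, D x -> eval e [x] (h x).

Definition is_21_structure (f : nat -> nat) : Prop :=
  forall a, (exists x, f x = a) /\
    (forall x y z, f x = a -> f y = a -> f z = a -> x = y \/ x = z \/ y = z).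

Definition computable_21 (f : nat -> nat) : Prop :=
  is_21_structure f /\ computable_fun f.

Definition cyclic (f : nat -> nat) (x : nat) : Prop :=
  exists n, 0 < n /\ Nat.iter n f x = x.

Definition tree (f : nat -> nat) (x : nat) (a : nat) : Prop :=
  exists n, Nat.iter n f a = x.

Definition tree_edge (f : nat -> nat) (x : nat) (a b : nat) : Prop :=
  tree f x a /\ tree f x b /\ b = f a.

Definition cycle_length (f : nat -> nat) (c K : nat) : Prop :=
  0 < K /\ Nat.iter K f c = c /\ (forall m, 0 < m < K -> Nat.iter m f c <> c).

Definition extree (f : nat -> nat) (c : nat) (a : nat) : Prop :=
  exists K, cycle_length f c K /\
    exists n, Nat.iter n f a = c /\
      (forall m, m < n -> Nat.iter (m + K) f a <> Nat.iter m f a).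

Definition extree_edge (f : nat -> nat) (c : nat) (a b : nat) : Prop :=
  extree f c a /\ a <> c /\ b = f a.

Definition digraph_iso (V : nat -> Prop) (E : nat -> nat -> Prop)
    (W : nat -> Prop) (F : nat -> nat -> Prop) (h : nat -> nat) : Prop :=
  (forall a, V a -> W (h a)) /\
  (forall a b, V a -> V b -> h a = h b -> a = b) /\
  (forall b, W b -> exists a, V a /\ h a = b) /\
  (forall a b, V a -> V b -> (E a b <-> F (h a) (h b))).

Definition digraph_isomorphic V E W F : Prop :=
  exists h, digraph_iso V E W F h.

Definition Tree_iso (f g : nat -> nat) (x y : nat) : Prop :=
  digraph_isomorphic (tree f x) (tree_edge f x) (tree g y) (tree_edge g y).

Definition exTree_iso (f g : nat -> nat) (c d : nat) : Prop :=
  digraph_isomorphic (extree f c) (extree_edge f c) (extree g d) (extree_edge g d).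

Definition struct_isomorphic (f g : nat -> nat) : Prop :=
  exists h h' : nat -> nat,
    (forall a, h' (h a) = a) /\ (forall b, h (h' b) = b) /\
    (forall a, g (h a) = h (f a)).

Definition two_preimages (f : nat -> nat) (x : nat) : Prop :=
  exists y z, y <> z /\ f y = x /\ f z = x.

Definition beta (f : nat -> nat) (x : nat) : nat :=
  if excluded_middle_informative (two_preimages f x) then 2 else 1.

Definition split_hair (f : nat -> nat) (x : nat) : Prop := beta f x = 2.

(** branch isomorphism function (meaningful on the split hair set) *)
Definition iso_fun (f : nat -> nat) (x : nat) : nat :=
  if excluded_middle_informative
       (exists x1 x2, x1 <> x2 /\ f x1 = x /\ f x2 = x /\ Tree_iso f f x1 x2)
  then 1 else 0.

(* A tree isomorphism is built top-down: once a node [x] of A is matched with a node [y] of B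
   with isomorphic trees, the preimages of [x] are matched with those of [y].  With one preimage
   there is no choice; with two whose trees are isomorphic ([iso = 1]) either matching works;
   otherwise exactly one matching is right, and it is found by searching for a depth at which the
   other one fails.  This works because trees of a (2,1):1 structure are isomorphic as soon as they
   are isomorphic up to every finite depth, and isomorphism up to depth [n] is computable from [beta]:
   it is computed by primitive recursion on [n] for all pairs of nodes below a bound at once, the
   boolean table being coded by the bits of one number.  An exTree is its root together with the
   tree of the unique non-cyclic preimage of the root, which reduces (ii) to (i). *)

From Stdlib Require Import List Arith Bool Lia Classical ClassicalEpsilon FunctionalExtensionality.
Import ListNotations.

Lemma exists_least (P : nat -> bool) :
  (exists n, P n = true) -> exists n, P n = true /\ forall m, m < n -> P m = false.
Proof.
  intros [n Pn]. induction n as [n IH] using lt_wf_ind.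
  destruct (classic (exists m, m < n /\ P m = true)) as [[m [Hm Pm]] | Hnone].
  - exact (IH m Hm Pm).
  - exists n. split; [exact Pn |]. intros m Hm.
    destruct (P m) eqn:Pm; [| reflexivity]. exfalso. eauto.
Qed.

Definition least (P : nat -> bool) : nat :=
  epsilon (inhabits 0) (fun n => P n = true /\ forall m, m < n -> P m = false).

Lemma least_spec P : (exists n, P n = true) ->
  P (least P) = true /\ forall m, m < least P -> P m = false.
Proof. intros H. unfold least. apply epsilon_spec, exists_least, H. Qed.

Lemma least_unique P n : P n = true -> (forall m, m < n -> P m = false) -> least P = n.
Proof.
  intros Pn Hmin. destruct (least_spec P) as [Pl Hl]; [eauto |].
  destruct (lt_eq_lt_dec (least P) n) as [[Hlt | Heq] | Hgt]; auto.
  - rewrite Hmin in Pl; [discriminate | exact Hlt].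
  - rewrite Hl in Pn; [discriminate | exact Hgt].
Qed.

Lemma least_ext P Q : (forall n, P n = Q n) -> least P = least Q.
Proof. intros H. f_equal. apply functional_extensionality, H. Qed.

(** * Preimages and trees *)

Definition pre1 (f : nat -> nat) (x : nat) : nat := least (fun z => f z =? x).

(* When [x] has a single preimage the predicate holds everywhere, so [pre2 f x = 0]:
   the search always terminates. *)
Definition pre2 (f : nat -> nat) (x : nat) : nat :=
  least (fun z => (beta f x =? 1) || ((f z =? x) && negb (z =? pre1 f x))).

Lemma beta_cases f x : beta f x = 1 \/ beta f x = 2.
Proof. unfold beta. destruct excluded_middle_informative; auto. Qed.

Lemma beta2_iff f x : beta f x = 2 <-> two_preimages f x.
Proof. unfold beta. destruct excluded_middle_informative; split; auto; intros; try discriminate; tauto. Qed.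

Lemma beta1_iff f x : beta f x = 1 <-> ~ two_preimages f x.
Proof. unfold beta. destruct excluded_middle_informative; split; auto; intros; try discriminate; tauto. Qed.

Lemma beta2_of_preimages f x y z : f y = x -> f z = x -> y <> z -> beta f x = 2.
Proof. intros. apply beta2_iff. exists y, z. auto. Qed.

Section Preimages.
Variable f : nat -> nat.
Hypothesis Hf : is_21_structure f.

Lemma f_pre1 x : f (pre1 f x) = x.
Proof.
  destruct (Hf x) as [[z Hz] _]. apply Nat.eqb_eq, (least_spec (fun z => f z =? x)).
  exists z. apply Nat.eqb_eq, Hz.
Qed.

Lemma beta1_preimage x z : beta f x = 1 -> f z = x -> z = pre1 f x.
Proof.
  intros H1 H2. apply beta1_iff in H1. destruct (Nat.eq_dec z (pre1 f x)); auto.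
  exfalso; apply H1. exists z, (pre1 f x). auto using f_pre1.
Qed.

Lemma beta2_pre2 x : beta f x = 2 -> f (pre2 f x) = x /\ pre2 f x <> pre1 f x.
Proof.
  intros H. pose proof H as H'. apply beta2_iff in H' as [y [z [Hyz [Hy Hz]]]].
  assert (Hb : (beta f x =? 1) = false) by (rewrite H; reflexivity).
  destruct (least_spec (fun w => (beta f x =? 1) || ((f w =? x) && negb (w =? pre1 f x))))
    as [Hleast _].
  - rewrite Hb. destruct (Nat.eq_dec y (pre1 f x)); [exists z | exists y];
      apply andb_true_iff; rewrite negb_true_iff, Nat.eqb_eq, Nat.eqb_neq; split; congruence.
  - fold (pre2 f x) in Hleast. rewrite Hb in Hleast.
    apply andb_true_iff in Hleast as [Hpre Hneq].
    rewrite negb_true_iff, Nat.eqb_neq in Hneq. apply Nat.eqb_eq in Hpre. auto.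
Qed.

Lemma beta2_preimage x z : beta f x = 2 -> f z = x -> z = pre1 f x \/ z = pre2 f x.
Proof.
  intros H Hz. destruct (beta2_pre2 x H) as [Hpre Hneq].
  destruct (proj2 (Hf x) z (pre1 f x) (pre2 f x) Hz (f_pre1 x) Hpre) as [E|[E|E]];
    auto; congruence.
Qed.

End Preimages.

Lemma iter_noncyclic_unique f a0 a n m :
  ~ cyclic f a0 -> Nat.iter n f a = a0 -> Nat.iter m f a = a0 -> n = m.
Proof.
  intros Hc Hn Hm. destruct (lt_eq_lt_dec n m) as [[h|h]|h]; auto; exfalso; apply Hc.
  - exists (m - n). split; [lia |]. rewrite <- Hn at 1. rewrite <- Nat.iter_add.
    replace (m - n + n) with m by lia. auto.
  - exists (n - m). split; [lia |]. rewrite <- Hm at 1. rewrite <- Nat.iter_add.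
    replace (n - m + m) with n by lia. auto.
Qed.

Lemma tree_root f u : tree f u u.
Proof. exists 0. reflexivity. Qed.

Lemma tree_preimage f u z z' : tree f u z -> f z' = z -> tree f u z'.
Proof. intros [n Hn] H. exists (S n). rewrite Nat.iter_succ_r, H. auto. Qed.

Lemma tree_parent f u z : tree f u z -> z <> u -> tree f u (f z).
Proof. intros [[|n] Hn] Hne; [contradiction |]. exists n. rewrite <- Nat.iter_succ_r. auto. Qed.

Lemma tree_not_parent f u : ~ cyclic f u -> ~ tree f u (f u).
Proof. intros Hc [n Hn]. apply Hc. exists (S n). split; [lia |]. rewrite Nat.iter_succ_r. auto. Qed.

Lemma cyclic_f f x : cyclic f x -> cyclic f (f x).
Proof.
  intros [n [Hn E]]. exists n. split; auto. rewrite <- Nat.iter_succ_r, Nat.iter_succ, E. reflexivity.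
Qed.

Lemma cyclic_iter f k x : cyclic f x -> cyclic f (Nat.iter k f x).
Proof. induction k; cbn; auto using cyclic_f. Qed.

Lemma not_cyclic_preimage f x x' : ~ cyclic f x -> f x' = x -> ~ cyclic f x'.
Proof. intros N E C. apply N. rewrite <- E. apply cyclic_f; auto. Qed.

Lemma tree_not_cyclic f u z : ~ cyclic f u -> tree f u z -> ~ cyclic f z.
Proof. intros Hu [n Hn] Hz. apply Hu. rewrite <- Hn. apply cyclic_iter; auto. Qed.

(** * Top-down construction of tree isomorphisms *)

Section TopDown.
Variables f g : nat -> nat.
Hypothesis Hf : is_21_structure f.
Hypothesis Hg : is_21_structure g.
Variables a0 b0 : nat.
Hypothesis Ha0 : ~ cyclic f a0.
Hypothesis Hb0 : ~ cyclic g b0.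

(* [choose x y x'] is the partner of a preimage [x'] of [x] once [x] is matched with [y]. *)
Variable matched : nat -> nat -> Prop.
Variable choose : nat -> nat -> nat -> nat.
Hypothesis matched_root : matched a0 b0.
Hypothesis matched_beta : forall x y, matched x y -> beta f x = beta g y.
Hypothesis choose_preimage : forall x y x', matched x y -> f x' = x ->
  g (choose x y x') = y /\ matched x' (choose x y x').
Hypothesis choose_inj : forall x y x1 x2, matched x y -> f x1 = x -> f x2 = x ->
  choose x y x1 = choose x y x2 -> x1 = x2.

(* The image of a node [a] at depth [n], computed along the path from [a0] down to [a]. *)
Fixpoint walk (n a : nat) : nat :=
  match n with 0 => b0 | S m => choose (f a) (walk m (f a)) a end.

Definition depth (a : nat) : nat := least (fun n => Nat.iter n f a =? a0).

Definition top_down (a : nat) : nat := walk (depth a) a.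

Lemma depth_spec a n : Nat.iter n f a = a0 -> depth a = n.
Proof.
  intros H. apply least_unique; [apply Nat.eqb_eq, H |].
  intros m Hm. apply Nat.eqb_neq. intros E.
  pose proof (iter_noncyclic_unique f a0 a m n Ha0 E H). lia.
Qed.

Lemma walk_matched n a : Nat.iter n f a = a0 -> matched a (walk n a) /\ Nat.iter n g (walk n a) = b0.
Proof.
  revert a. induction n as [|n IH]; intros a Ha; [cbn in *; subst; auto |].
  rewrite Nat.iter_succ_r in Ha. destruct (IH _ Ha) as [Hm Hiter].
  destruct (choose_preimage _ _ a Hm eq_refl) as [Hg' Hm']. split; [exact Hm' |].
  cbn [walk]. rewrite Nat.iter_succ_r, Hg'. exact Hiter.
Qed.

Lemma choose_surj x y b : matched x y -> g b = y -> exists x', f x' = x /\ choose x y x' = b.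
Proof.
  intros Hm Hb. destruct (beta_cases f x) as [B1|B2].
  - exists (pre1 f x). split; [apply f_pre1; auto |].
    destruct (choose_preimage x y (pre1 f x) Hm (f_pre1 f Hf x)) as [Hc _].
    assert (B1' : beta g y = 1) by (rewrite <- (matched_beta x y Hm); exact B1).
    rewrite (beta1_preimage g Hg y b), (beta1_preimage g Hg y (choose x y (pre1 f x))); auto.
  - destruct (beta2_pre2 f x B2) as [Hpre2 Hneq].
    destruct (choose_preimage x y (pre1 f x) Hm (f_pre1 f Hf x)) as [Hc1 _].
    destruct (choose_preimage x y (pre2 f x) Hm Hpre2) as [Hc2 _].
    assert (choose x y (pre1 f x) <> choose x y (pre2 f x)).
    { intros E. apply Hneq. symmetry. apply (choose_inj x y); auto using f_pre1. }
    destruct (proj2 (Hg y) b _ _ Hb Hc1 Hc2) as [E|[E|E]]; [| | contradiction].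
    + exists (pre1 f x). split; auto using f_pre1.
    + exists (pre2 f x). auto.
Qed.

Lemma walk_surj n b : Nat.iter n g b = b0 -> exists a, Nat.iter n f a = a0 /\ walk n a = b.
Proof.
  revert b. induction n as [|n IH]; intros b Hb; [exists a0; cbn in *; auto |].
  rewrite Nat.iter_succ_r in Hb. destruct (IH _ Hb) as [a [Ha Hwalk]].
  destruct (walk_matched n a Ha) as [Hm _]. rewrite Hwalk in Hm.
  destruct (choose_surj a (g b) b Hm eq_refl) as [a' [Ha' Hc]].
  exists a'. split; [rewrite Nat.iter_succ_r, Ha'; auto |]. cbn. rewrite Ha', Hwalk. auto.
Qed.

Lemma walk_inj n a a' : Nat.iter n f a = a0 -> Nat.iter n f a' = a0 -> walk n a = walk n a' -> a = a'.
Proof.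
  revert a a'. induction n as [|n IH]; intros a a' Ha Ha' E; [cbn in *; congruence |].
  rewrite Nat.iter_succ_r in Ha, Ha'. cbn in E.
  destruct (walk_matched n (f a) Ha) as [Hm _], (walk_matched n (f a') Ha') as [Hm' _].
  destruct (choose_preimage _ _ a Hm eq_refl) as [Hg1 _], (choose_preimage _ _ a' Hm' eq_refl) as [Hg2 _].
  assert (Efa : f a = f a') by (apply IH; auto; congruence).
  rewrite <- Efa in E. apply (choose_inj (f a) (walk n (f a))); auto.
Qed.

Lemma top_down_spec a : tree f a0 a ->
  matched a (top_down a) /\ Nat.iter (depth a) g (top_down a) = b0.
Proof. intros [n Hn]. unfold top_down. rewrite (depth_spec a n Hn). apply walk_matched, Hn. Qed.

Lemma top_down_parent a : tree f a0 a -> a <> a0 -> g (top_down a) = top_down (f a).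
Proof.
  intros [[|n] Hn] Hne; [contradiction |].
  unfold top_down. rewrite (depth_spec a (S n) Hn). rewrite Nat.iter_succ_r in Hn.
  rewrite (depth_spec (f a) n Hn). cbn [walk].
  destruct (walk_matched n (f a) Hn) as [Hm _]. apply (choose_preimage _ _ a Hm eq_refl).
Qed.

Lemma top_down_inj a a' : tree f a0 a -> tree f a0 a' -> top_down a = top_down a' -> a = a'.
Proof.
  intros Ta Ta' E. destruct (top_down_spec a Ta) as [_ Da], (top_down_spec a' Ta') as [_ Da'].
  rewrite E in Da. pose proof (iter_noncyclic_unique g b0 _ _ _ Hb0 Da Da') as Ed.
  destruct Ta as [n Hn], Ta' as [n' Hn'].
  unfold top_down in E. rewrite (depth_spec a n Hn), (depth_spec a' n' Hn') in *. subst n'.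
  apply (walk_inj n); auto.
Qed.

Lemma top_down_iso : digraph_iso (tree f a0) (tree_edge f a0) (tree g b0) (tree_edge g b0) top_down.
Proof.
  split; [| split; [| split]].
  - intros a Ta. exists (depth a). apply top_down_spec, Ta.
  - apply top_down_inj.
  - intros b [n Hn]. destruct (walk_surj n b Hn) as [a [Ha Hwalk]].
    exists a. split; [exists n; auto |]. unfold top_down. rewrite (depth_spec a n Ha). auto.
  - intros a b Ta Tb. unfold tree_edge. split.
    + intros [_ [_ ->]].
      assert (a <> a0) by (intros ->; apply (tree_not_parent f a0 Ha0 Tb)).
      split; [exists (depth a); apply top_down_spec; auto |].
      split; [exists (depth (f a)); apply top_down_spec; auto |].
      symmetry. apply top_down_parent; auto.
    + intros [Tda [Tdb E]]. split; auto. split; auto.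
      assert (Hne : a <> a0).
      { intros ->. assert (Hroot : top_down a0 = b0).
        { unfold top_down. rewrite (depth_spec a0 0 eq_refl). reflexivity. }
        rewrite Hroot in E. rewrite E in Tdb. apply (tree_not_parent g b0 Hb0 Tdb). }
      rewrite top_down_parent in E; auto. apply top_down_inj; auto using tree_parent.
Qed.

End TopDown.

(** * Isomorphism up to finite depth *)

(* [iso_upto f g n u v]: the trees of [u] and [v], cut at depth [n], are isomorphic. *)
Fixpoint iso_upto (f g : nat -> nat) (n : nat) (u v : nat) : Prop :=
  match n with
  | 0 => True
  | S m => beta f u = beta g v /\
      (beta f u = 1 -> iso_upto f g m (pre1 f u) (pre1 g v)) /\
      (beta f u = 2 ->
         (iso_upto f g m (pre1 f u) (pre1 g v) /\ iso_upto f g m (pre2 f u) (pre2 g v)) \/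
         (iso_upto f g m (pre1 f u) (pre2 g v) /\ iso_upto f g m (pre2 f u) (pre1 g v)))
  end.

Definition fin_iso (f g : nat -> nat) (u v : nat) : Prop := forall n, iso_upto f g n u v.

Lemma iso_upto_pred f g n u v : iso_upto f g (S n) u v -> iso_upto f g n u v.
Proof.
  revert u v. induction n as [|n IH]; intros u v H; [exact I |]. destruct H as [Hb [H1 H2]].
  split; [exact Hb |]. split.
  - intros E. apply IH, H1, E.
  - intros E. destruct (H2 E) as [[A B]|[A B]]; [left | right]; split; apply IH; auto.
Qed.

Lemma iso_upto_le f g n m u v : n <= m -> iso_upto f g m u v -> iso_upto f g n u v.
Proof. induction 1; auto using iso_upto_pred. Qed.

Lemma iso_upto_sym f g n u v : iso_upto f g n u v -> iso_upto g f n v u.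
Proof.
  revert u v. induction n as [|n IH]; intros u v H; [exact I |]. destruct H as [Hb [H1 H2]].
  split; [congruence |]. split.
  - intros E. apply IH, H1. congruence.
  - intros E. destruct (H2 ltac:(congruence)) as [[A B]|[A B]]; [left | right]; split; apply IH; auto.
Qed.

Lemma iso_upto_trans f g h n u v w :
  iso_upto f g n u v -> iso_upto g h n v w -> iso_upto f h n u w.
Proof.
  revert u v w. induction n as [|n IH]; intros u v w H K; [exact I |].
  destruct H as [Hb [H1 H2]], K as [Kb [K1 K2]].
  split; [congruence |]. split.
  - intros E. apply IH with (pre1 g v); auto. apply K1. congruence.
  - intros E. destruct (H2 E) as [[A B]|[A B]], (K2 ltac:(congruence)) as [[C D]|[C D]];
      [left | right | right | left]; split; eauto.
Qed.

Lemma fin_iso_sym f g u v : fin_iso f g u v -> fin_iso g f v u.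
Proof. intros H n. apply iso_upto_sym, H. Qed.

Lemma fin_iso_trans f g h u v w : fin_iso f g u v -> fin_iso g h v w -> fin_iso f h u w.
Proof. intros H K n. eapply iso_upto_trans; eauto. Qed.

Lemma fin_iso_beta f g u v : fin_iso f g u v -> beta f u = beta g v.
Proof. intros H. apply (H 1). Qed.

Lemma fin_iso_beta1 f g u v : fin_iso f g u v -> beta f u = 1 -> fin_iso f g (pre1 f u) (pre1 g v).
Proof. intros H E n. exact (proj1 (proj2 (H (S n))) E). Qed.

(* Only one of the two matchings of the children may work at each depth, but one of them works at
   infinitely many depths, hence at every depth. *)
Lemma fin_iso_beta2 f g u v : fin_iso f g u v -> beta f u = 2 ->
  (fin_iso f g (pre1 f u) (pre1 g v) /\ fin_iso f g (pre2 f u) (pre2 g v)) \/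
  (fin_iso f g (pre1 f u) (pre2 g v) /\ fin_iso f g (pre2 f u) (pre1 g v)).
Proof.
  intros H E.
  destruct (classic (forall n, iso_upto f g n (pre1 f u) (pre1 g v) /\
                               iso_upto f g n (pre2 f u) (pre2 g v))) as [Hstraight | Hfail].
  - left. split; intro n; apply Hstraight.
  - right. apply not_all_ex_not in Hfail as [N HN].
    assert (Hcross : forall n, N <= n ->
      iso_upto f g n (pre1 f u) (pre2 g v) /\ iso_upto f g n (pre2 f u) (pre1 g v)).
    { intros n Hn. destruct (proj2 (proj2 (H (S n))) E) as [[C D]|C]; auto.
      exfalso. apply HN. split; eapply iso_upto_le; eauto. }
    split; intro n; destruct (Hcross (max n N) ltac:(lia)) as [P Q];
      eapply iso_upto_le; [| exact P | | exact Q]; lia.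
Qed.

Definition iso_step (f g : nat -> nat) (L : nat -> nat -> bool) (u v : nat) : bool :=
  (beta f u =? beta g v) &&
  (if beta f u =? 1 then L (pre1 f u) (pre1 g v)
   else (L (pre1 f u) (pre1 g v) && L (pre2 f u) (pre2 g v)) ||
        (L (pre1 f u) (pre2 g v) && L (pre2 f u) (pre1 g v))).

(* [iso_upto] decided simultaneously for all pairs below the bound [B]; pairs outside the bound are
   optimistically declared isomorphic. *)
Fixpoint iso_table (f g : nat -> nat) (B n u v : nat) : bool :=
  match n with
  | 0 => true
  | S m => if (u <? B) && (v <? B) then iso_step f g (iso_table f g B m) u v else true
  end.

(* A bound on the nodes of the tree of [u] cut at depth [n]. *)
Fixpoint span (f : nat -> nat) (n u : nat) : nat :=
  match n with
  | 0 => S u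
  | S m => max (S u) (max (span f m (pre1 f u)) (span f m (pre2 f u)))
  end.

Lemma iso_table_of_iso_upto f g B n u v : iso_upto f g n u v -> iso_table f g B n u v = true.
Proof.
  revert u v. induction n as [|n IH]; intros u v H; [reflexivity |]. cbn [iso_table].
  destruct ((u <? B) && (v <? B)); [| reflexivity]. destruct H as [Hb [H1 H2]]. unfold iso_step.
  rewrite Hb, Nat.eqb_refl. cbn. destruct (beta_cases g v) as [E|E]; rewrite E; cbn.
  - apply IH, H1. congruence.
  - destruct (H2 ltac:(congruence)) as [[A C]|[A C]]; rewrite (IH _ _ A), (IH _ _ C);
      [reflexivity | apply orb_true_r].
Qed.

Lemma iso_table_pred f g B n u v : iso_table f g B (S n) u v = true -> iso_table f g B n u v = true.
Proof.
  revert u v. induction n as [|n IH]; intros u v H; [reflexivity |].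
  cbn [iso_table] in *. destruct ((u <? B) && (v <? B)); [| reflexivity]. unfold iso_step in *.
  apply andb_true_iff in H as [H0 H]. rewrite H0. cbn.
  destruct (beta f u =? 1); [auto |].
  apply orb_true_iff in H as [H|H]; apply andb_true_iff in H as [A C];
    rewrite (IH _ _ A), (IH _ _ C); [reflexivity | apply orb_true_r].
Qed.

Lemma iso_table_le f g B n m u v : n <= m -> iso_table f g B m u v = true -> iso_table f g B n u v = true.
Proof. induction 1; auto using iso_table_pred. Qed.

Lemma iso_upto_of_iso_table f g n B u v : span f n u <= B -> span g n v <= B ->
  iso_table f g B n u v = true -> iso_upto f g n u v.
Proof.
  revert B u v. induction n as [|n IH]; intros B u v Hu Hv H; [exact I |].
  cbn [span] in Hu, Hv. cbn [iso_table] in H.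
  replace ((u <? B) && (v <? B)) with true in H
    by (symmetry; apply andb_true_iff; split; apply Nat.ltb_lt; lia).
  unfold iso_step in H. apply andb_true_iff in H as [H0 H]. apply Nat.eqb_eq in H0.
  split; [exact H0 |]. split.
  - intros E. rewrite E in H. apply (IH B); auto; lia.
  - intros E. rewrite E in H. cbn in H.
    apply orb_true_iff in H as [H|H]; apply andb_true_iff in H as [A C]; [left | right];
      split; apply (IH B); auto; lia.
Qed.

Lemma fin_iso_of_iso_tables f g u v : (forall m, iso_table f g m m u v = true) -> fin_iso f g u v.
Proof.
  intros H n. set (m := max n (max (span f n u) (span g n v))).
  apply (iso_upto_of_iso_table f g n m); try lia. apply iso_table_le with m; [lia | apply H].
Qed.

Section IsoFinIso.
Variables f g : nat -> nat.
Hypothesis Hf : is_21_structure f.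
Hypothesis Hg : is_21_structure g.
Variables u v : nat.
Hypothesis Hu : ~ cyclic f u.
Variable h : nat -> nat.
Hypothesis Hiso : digraph_iso (tree f u) (tree_edge f u) (tree g v) (tree_edge g v) h.

Lemma iso_maps_preimage z z' : tree f u z -> f z' = z -> g (h z') = h z.
Proof.
  intros Tz E. destruct Hiso as [_ [_ [_ He]]].
  assert (Tz' : tree f u z') by (eapply tree_preimage; eauto).
  symmetry. apply (He z' z Tz' Tz). repeat split; auto.
Qed.

Lemma iso_reflects_preimage z w : tree f u z -> g w = h z -> exists z', f z' = z /\ h z' = w.
Proof.
  intros Tz E. destruct Hiso as [Hm [_ [Hs He]]].
  assert (Tw : tree g v w) by (eapply tree_preimage; eauto).
  destruct (Hs w Tw) as [z' [Tz' <-]]. exists z'. split; auto.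
  symmetry. apply (He z' z Tz' Tz). repeat split; auto.
Qed.

Lemma iso_inj a b : tree f u a -> tree f u b -> h a = h b -> a = b.
Proof. apply Hiso. Qed.

Lemma iso_beta z : tree f u z -> beta f z = beta g (h z).
Proof.
  intros Tz. destruct (beta_cases f z) as [E|E], (beta_cases g (h z)) as [E'|E']; try congruence.
  - rewrite E'. apply beta2_iff in E' as [w1 [w2 [N [A B]]]].
    destruct (iso_reflects_preimage z w1 Tz A) as [z1 [F1 G1]].
    destruct (iso_reflects_preimage z w2 Tz B) as [z2 [F2 G2]].
    apply beta2_of_preimages with z1 z2; congruence.
  - destruct (beta2_pre2 f z E) as [A N].
    assert (T1 : tree f u (pre1 f z)) by exact (tree_preimage f u z _ Tz (f_pre1 f Hf z)).
    assert (T2 : tree f u (pre2 f z)) by exact (tree_preimage f u z _ Tz A).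
    rewrite E. symmetry. apply beta2_of_preimages with (h (pre1 f z)) (h (pre2 f z)).
    + apply iso_maps_preimage; auto using f_pre1.
    + apply iso_maps_preimage; auto.
    + intro K. apply N. symmetry. apply iso_inj; auto.
Qed.

Lemma iso_iso_upto n z : tree f u z -> iso_upto f g n z (h z).
Proof.
  revert z. induction n as [|n IH]; intros z Tz; [exact I |].
  pose proof (iso_beta z Tz) as Eb.
  assert (T1 : tree f u (pre1 f z)) by exact (tree_preimage f u z _ Tz (f_pre1 f Hf z)).
  assert (P1 : g (h (pre1 f z)) = h z) by (apply iso_maps_preimage; auto using f_pre1).
  split; [exact Eb |]. split.
  - intros E. rewrite <- (beta1_preimage g Hg (h z) (h (pre1 f z))); auto. congruence.
  - intros E. destruct (beta2_pre2 f z E) as [A N].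
    assert (T2 : tree f u (pre2 f z)) by exact (tree_preimage f u z _ Tz A).
    assert (P2 : g (h (pre2 f z)) = h z) by (apply iso_maps_preimage; auto).
    assert (NH : h (pre1 f z) <> h (pre2 f z)) by (intro K; apply N; symmetry; apply iso_inj; auto).
    destruct (beta2_preimage g Hg (h z) _ ltac:(congruence) P1) as [X|X],
             (beta2_preimage g Hg (h z) _ ltac:(congruence) P2) as [Y|Y]; try congruence.
    + left. rewrite <- X, <- Y. auto.
    + right. rewrite <- X, <- Y. auto.
Qed.

Lemma iso_root : h u = v.
Proof.
  destruct Hiso as [Hm [_ [Hs He]]].
  destruct (Hm u (tree_root f u)) as [[|k] Hk]; [exact Hk | exfalso].
  assert (Tg : tree g v (g (h u))) by (exists k; rewrite <- Nat.iter_succ_r; auto).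
  destruct (Hs _ Tg) as [z [Tz Ez]].
  destruct (proj2 (He u z (tree_root f u) Tz) (conj (Hm u (tree_root f u)) (conj (Hm z Tz) Ez)))
    as [_ [_ ->]].
  apply (tree_not_parent f u Hu Tz).
Qed.

End IsoFinIso.

Lemma Tree_iso_fin_iso f g u v : is_21_structure f -> is_21_structure g -> ~ cyclic f u ->
  Tree_iso f g u v -> fin_iso f g u v.
Proof.
  intros Hf Hg Hu [h Hiso] n. rewrite <- (iso_root f g u v Hu h Hiso).
  apply (iso_iso_upto f g Hf Hg u v h Hiso), tree_root.
Qed.

(** * Choosers *)

Definition match_straight f g x y x' := if x' =? pre1 f x then pre1 g y else pre2 g y.
Definition match_cross f g x y x' := if x' =? pre1 f x then pre2 g y else pre1 g y.

Definition good_chooser (f g : nat -> nat) (choose : nat -> nat -> nat -> nat) : Prop :=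
  forall x y, ~ cyclic f x -> fin_iso f g x y ->
    (beta f x = 1 /\ forall x', choose x y x' = pre1 g y) \/
    (beta f x = 2 /\ fin_iso f g (pre1 f x) (pre1 g y) /\ fin_iso f g (pre2 f x) (pre2 g y) /\
       forall x', choose x y x' = match_straight f g x y x') \/
    (beta f x = 2 /\ fin_iso f g (pre1 f x) (pre2 g y) /\ fin_iso f g (pre2 f x) (pre1 g y) /\
       forall x', choose x y x' = match_cross f g x y x').

Section GoodChooser.
Variables f g : nat -> nat.
Hypothesis Hf : is_21_structure f.
Hypothesis Hg : is_21_structure g.
Variable choose : nat -> nat -> nat -> nat.
Hypothesis Hchoose : good_chooser f g choose.

Let matched x y := fin_iso f g x y /\ ~ cyclic f x.

Lemma good_choose_preimage x y x' : matched x y -> f x' = x ->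
  g (choose x y x') = y /\ matched x' (choose x y x').
Proof.
  intros [R Nc] E. assert (Nc' : ~ cyclic f x') by (eapply not_cyclic_preimage; eauto).
  pose proof (fin_iso_beta f g x y R) as Eb. unfold matched.
  destruct (Hchoose x y Nc R) as [[B C]|[[B [R1 [R2 C]]]|[B [R1 [R2 C]]]]]; rewrite C.
  - rewrite (beta1_preimage f Hf x x' B E) in *. repeat split; auto using f_pre1, fin_iso_beta1.
  - destruct (beta2_pre2 g y ltac:(congruence)) as [A _]. unfold match_straight.
    destruct (Nat.eqb_spec x' (pre1 f x)) as [-> | e]; [repeat split; auto using f_pre1 |].
    destruct (beta2_preimage f Hf x x' B E) as [Hx | ->]; [contradiction | repeat split; auto].
  - destruct (beta2_pre2 g y ltac:(congruence)) as [A _]. unfold match_cross.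
    destruct (Nat.eqb_spec x' (pre1 f x)) as [-> | e]; [repeat split; auto |].
    destruct (beta2_preimage f Hf x x' B E) as [Hx | ->]; [contradiction | repeat split; auto using f_pre1].
Qed.

Lemma good_choose_inj x y x1 x2 : matched x y -> f x1 = x -> f x2 = x ->
  choose x y x1 = choose x y x2 -> x1 = x2.
Proof.
  intros [R Nc] E1 E2 E. pose proof (fin_iso_beta f g x y R) as Eb.
  destruct (Hchoose x y Nc R) as [[B C]|[[B [_ [_ C]]]|[B [_ [_ C]]]]].
  - rewrite (beta1_preimage f Hf x x1 B E1), (beta1_preimage f Hf x x2 B E2). reflexivity.
  - destruct (beta2_pre2 g y ltac:(congruence)) as [_ N], (beta2_pre2 f x B) as [_ N'].
    rewrite !C in E. unfold match_straight in E.
    destruct (beta2_preimage f Hf x x1 B E1) as [-> | ->], (beta2_preimage f Hf x x2 B E2) as [-> | ->];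
      rewrite ?Nat.eqb_refl, ?(proj2 (Nat.eqb_neq _ _) N') in E; congruence.
  - destruct (beta2_pre2 g y ltac:(congruence)) as [_ N], (beta2_pre2 f x B) as [_ N'].
    rewrite !C in E. unfold match_cross in E.
    destruct (beta2_preimage f Hf x x1 B E1) as [-> | ->], (beta2_preimage f Hf x x2 B E2) as [-> | ->];
      rewrite ?Nat.eqb_refl, ?(proj2 (Nat.eqb_neq _ _) N') in E; congruence.
Qed.

Lemma good_chooser_iso a0 b0 : ~ cyclic f a0 -> ~ cyclic g b0 -> fin_iso f g a0 b0 ->
  digraph_iso (tree f a0) (tree_edge f a0) (tree g b0) (tree_edge g b0) (top_down f a0 b0 choose).
Proof.
  intros Ha Hb R. apply (top_down_iso f g Hf Hg a0 b0 Ha Hb matched).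
  - split; auto.
  - intros x y [Rxy _]. apply fin_iso_beta, Rxy.
  - apply good_choose_preimage.
  - apply good_choose_inj.
Qed.

Lemma good_chooser_fin_iso a0 b0 a : ~ cyclic f a0 -> fin_iso f g a0 b0 -> tree f a0 a ->
  fin_iso f g a (top_down f a0 b0 choose a).
Proof.
  intros Ha R T. apply (top_down_spec f g a0 b0 Ha matched choose); auto.
  - split; auto.
  - apply good_choose_preimage.
Qed.

End GoodChooser.

Definition classical_chooser (f g : nat -> nat) (x y x' : nat) : nat :=
  if beta f x =? 1 then pre1 g y
  else if excluded_middle_informative
            (fin_iso f g (pre1 f x) (pre1 g y) /\ fin_iso f g (pre2 f x) (pre2 g y))
       then match_straight f g x y x' else match_cross f g x y x'.

Lemma classical_chooser_good f g : good_chooser f g (classical_chooser f g).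
Proof.
  intros x y _ R. unfold classical_chooser.
  destruct (beta_cases f x) as [E|E]; rewrite E; cbn; [left; auto | right].
  destruct excluded_middle_informative as [A|A]; [left; tauto | right].
  destruct (fin_iso_beta2 f g x y R E); tauto.
Qed.

Lemma fin_iso_Tree_iso f g u v : is_21_structure f -> is_21_structure g -> ~ cyclic f u ->
  ~ cyclic g v -> fin_iso f g u v -> Tree_iso f g u v.
Proof.
  intros Hf Hg Hu Hv R. eexists. apply good_chooser_iso; eauto using classical_chooser_good.
Qed.

Section Chooser.
Variables f g : nat -> nat.
Hypothesis Hf : is_21_structure f.

Lemma iso_fun_spec x : ~ cyclic f x -> beta f x = 2 ->
  (iso_fun f x <> 0 -> fin_iso f f (pre1 f x) (pre2 f x)) /\
  (iso_fun f x = 0 -> ~ Tree_iso f f (pre1 f x) (pre2 f x)).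
Proof.
  intros Nc B2. destruct (beta2_pre2 f x B2) as [A N].
  assert (N1 : ~ cyclic f (pre1 f x)) by (apply (not_cyclic_preimage f x); auto using f_pre1).
  assert (N2 : ~ cyclic f (pre2 f x)) by (apply (not_cyclic_preimage f x); auto).
  unfold iso_fun. destruct excluded_middle_informative as [E|E]; split; intros H; try congruence.
  - destruct E as [x1 [x2 [D [F1 [F2 T]]]]].
    destruct (beta2_preimage f Hf x x1 B2 F1) as [-> | ->],
             (beta2_preimage f Hf x x2 B2 F2) as [-> | ->]; try congruence.
    + apply Tree_iso_fin_iso; auto.
    + apply fin_iso_sym, Tree_iso_fin_iso; auto.
  - intros T. apply E. exists (pre1 f x), (pre2 f x). auto using f_pre1.
Qed.

Definition separating_depth (x y m : nat) : bool :=
  negb (iso_table f g m m (pre1 f x) (pre1 g y)) || negb (iso_table f g m m (pre1 f x) (pre2 g y)).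

(* If [pre1 f x] were finitely isomorphic to both preimages of [y], the two preimages of [x] would be
   isomorphic, against [iso_fun f x = 0]. *)
Lemma separating_depth_exists x y : ~ cyclic f x -> fin_iso f g x y -> beta f x = 2 ->
  iso_fun f x = 0 -> exists m, separating_depth x y m = true.
Proof.
  intros Nc R B2 I0. apply NNPP. intros Hnone.
  assert (Hall : forall m, iso_table f g m m (pre1 f x) (pre1 g y) = true /\
                           iso_table f g m m (pre1 f x) (pre2 g y) = true).
  { intros m. unfold separating_depth in Hnone.
    destruct (iso_table f g m m (pre1 f x) (pre1 g y)) eqn:E1,
             (iso_table f g m m (pre1 f x) (pre2 g y)) eqn:E2;
      auto; exfalso; apply Hnone; exists m; rewrite E1, E2; reflexivity. }
  assert (R1 : fin_iso f g (pre1 f x) (pre1 g y)) by (apply fin_iso_of_iso_tables; apply Hall).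
  assert (R2 : fin_iso f g (pre1 f x) (pre2 g y)) by (apply fin_iso_of_iso_tables; apply Hall).
  destruct (beta2_pre2 f x B2) as [A N].
  assert (Rff : fin_iso f f (pre1 f x) (pre2 f x)).
  { destruct (fin_iso_beta2 f g x y R B2) as [[S1 S2]|[S1 S2]];
      [apply fin_iso_trans with g (pre2 g y) | apply fin_iso_trans with g (pre1 g y)];
      auto using fin_iso_sym. }
  apply (proj2 (iso_fun_spec x Nc B2) I0).
  apply fin_iso_Tree_iso; auto; apply (not_cyclic_preimage f x); auto using f_pre1.
Qed.

Definition search (x y : nat) : nat := least (separating_depth x y).

(* [iso_fun f x] is consulted only when [x] has two preimages, where it is defined.  At the depth
   found by [search], [pre1 f x] fails to match one preimage of [y], so it must match the other. *)
Definition computable_chooser (x y x' : nat) : nat :=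
  if beta f x =? 2 then
    if iso_fun f x =? 0 then
      if iso_table f g (search x y) (search x y) (pre1 f x) (pre1 g y)
      then match_straight f g x y x' else match_cross f g x y x'
    else match_straight f g x y x'
  else pre1 g y.

Lemma computable_chooser_good : good_chooser f g computable_chooser.
Proof.
  intros x y Nc R. unfold computable_chooser. destruct (beta_cases f x) as [B1|B2].
  - left. rewrite B1. auto.
  - right. rewrite B2. cbn [Nat.eqb]. destruct (Nat.eqb_spec (iso_fun f x) 0) as [I0|I0].
    + destruct (least_spec _ (separating_depth_exists x y Nc R B2 I0)) as [Hsep _].
      fold (search x y) in Hsep. set (m := search x y) in *. unfold separating_depth in Hsep.
      destruct (iso_table f g m m (pre1 f x) (pre1 g y)) eqn:T1; cbn in Hsep.
      * assert (NR : ~ fin_iso f g (pre1 f x) (pre2 g y)).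
        { intros K. rewrite (iso_table_of_iso_upto f g m m _ _ (K m)) in Hsep. discriminate. }
        left. destruct (fin_iso_beta2 f g x y R B2); tauto.
      * assert (NR : ~ fin_iso f g (pre1 f x) (pre1 g y)).
        { intros K. rewrite (iso_table_of_iso_upto f g m m _ _ (K m)) in T1. discriminate. }
        right. destruct (fin_iso_beta2 f g x y R B2); tauto.
    + left. pose proof (proj1 (iso_fun_spec x Nc B2) I0) as Rff.
      destruct (fin_iso_beta2 f g x y R B2) as [[S1 S2]|[S1 S2]]; [tauto |].
      repeat split; auto.
      * apply fin_iso_trans with f (pre2 f x); auto.
      * apply fin_iso_trans with f (pre1 f x); auto using fin_iso_sym.
Qed.

End Chooser.

(** * Trees hanging off a cycle *)

Lemma cyclic_cycle_length f c : cyclic f c -> exists K, cycle_length f c K.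
Proof.
  intros [p [Hp E]].
  destruct (exists_least (fun n => (0 <? n) && (Nat.iter n f c =? c))) as [K [HK Hmin]].
  - exists p. apply andb_true_iff. rewrite Nat.ltb_lt, Nat.eqb_eq. auto.
  - apply andb_true_iff in HK as [A B]. rewrite Nat.ltb_lt in A. rewrite Nat.eqb_eq in B.
    exists K. repeat split; auto. intros m [Hm1 Hm2] Em.
    specialize (Hmin m Hm2). rewrite (proj2 (Nat.ltb_lt 0 m) Hm1), (proj2 (Nat.eqb_eq _ _) Em) in Hmin.
    discriminate.
Qed.

Lemma cyclic_preimage_on_orbit f c x : cyclic f x -> f x = c -> exists j, x = Nat.iter j f c.
Proof.
  intros [p [Hp E]] Fx. exists (p - 1). rewrite <- Fx, <- Nat.iter_succ_r.
  replace (S (p - 1)) with p by lia. auto.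
Qed.

Lemma cycle_length_orbit f c K j : cycle_length f c K -> Nat.iter K f (Nat.iter j f c) = Nat.iter j f c.
Proof.
  intros [_ [E _]]. rewrite <- Nat.iter_add, Nat.add_comm, Nat.iter_add, E. reflexivity.
Qed.

Lemma extree_root f c : cyclic f c -> extree f c c.
Proof.
  intros Hc. destruct (cyclic_cycle_length f c Hc) as [K HK].
  exists K. split; auto. exists 0. split; [reflexivity | lia].
Qed.

Lemma extree_branch f c a : extree f c a -> a <> c ->
  exists c', f c' = c /\ ~ cyclic f c' /\ tree f c' a.
Proof.
  intros [K [HK [[|n] [En Hm]]]] Hne; [contradiction |].
  exists (Nat.iter n f a). split; [rewrite <- Nat.iter_succ; auto |]. split; [| exists n; auto].
  intros Cy. destruct (cyclic_preimage_on_orbit f c _ Cy ltac:(rewrite <- Nat.iter_succ; auto)) as [j Ej].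
  apply (Hm n); [lia |]. rewrite Nat.add_comm, Nat.iter_add, Ej. apply cycle_length_orbit, HK.
Qed.

Lemma extree_of_tree f c c' a : cyclic f c -> f c' = c -> ~ cyclic f c' -> tree f c' a -> extree f c a.
Proof.
  intros Hc Fc Nc [k Hk]. destruct (cyclic_cycle_length f c Hc) as [K HK]. exists K. split; auto.
  exists (S k). split; [rewrite Nat.iter_succ, Hk; auto |].
  intros m Hm E. assert (Tm : tree f c' (Nat.iter m f a)).
  { exists (k - m). rewrite <- Nat.iter_add. replace (k - m + m) with k by lia. auto. }
  apply (tree_not_cyclic f c' _ Nc Tm). exists K. destruct HK as [K0 _]. split; auto.
  rewrite <- Nat.iter_add, Nat.add_comm. auto.
Qed.

(* The other preimage of [c] is its predecessor on the cycle. *)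
Lemma noncyclic_preimage_unique f c c1 c2 : is_21_structure f -> cyclic f c ->
  f c1 = c -> f c2 = c -> ~ cyclic f c1 -> ~ cyclic f c2 -> c1 = c2.
Proof.
  intros Hf Hc F1 F2 N1 N2. destruct (cyclic_cycle_length f c Hc) as [K HK].
  set (q := Nat.iter (K - 1) f c).
  assert (Fq : f q = c).
  { unfold q. rewrite <- Nat.iter_succ. replace (S (K - 1)) with K by (destruct HK; lia). apply HK. }
  assert (Cq : cyclic f q) by (apply cyclic_iter; auto).
  destruct (proj2 (Hf c) c1 c2 q F1 F2 Fq) as [E|[E|E]]; auto; rewrite E in *; contradiction.
Qed.

Lemma extree_not_cyclic f c a : extree f c a -> a <> c -> ~ cyclic f a.
Proof.
  intros E N. destruct (extree_branch f c a E N) as [c' [_ [Nc T]]]. apply (tree_not_cyclic f c'); auto.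
Qed.

Lemma extree_parent f c a : cyclic f c -> extree f c a -> a <> c -> extree f c (f a).
Proof.
  intros Hc E N. destruct (extree_branch f c a E N) as [c' [Fc [Nc T]]].
  destruct (Nat.eq_dec a c') as [->|Ne].
  - rewrite Fc. apply extree_root; auto.
  - apply extree_of_tree with c'; auto using tree_parent.
Qed.

Lemma extree_tree f c c' a : is_21_structure f -> cyclic f c -> f c' = c -> ~ cyclic f c' ->
  extree f c a -> a <> c -> tree f c' a.
Proof.
  intros Hf Hc Fc Nc E N. destruct (extree_branch f c a E N) as [c'' [F2 [N2 T]]].
  rewrite (noncyclic_preimage_unique f c c' c''); auto.
Qed.

Lemma tree_not_cyclic_root f c c' a : cyclic f c -> ~ cyclic f c' -> tree f c' a -> a <> c.
Proof. intros Hc Nc T ->. exact (tree_not_cyclic f c' c Nc T Hc). Qed.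

Section ExTreeIso.
Variables f g : nat -> nat.
Hypothesis Hf : is_21_structure f.
Hypothesis Hg : is_21_structure g.
Variables c d : nat.
Hypothesis Hc : cyclic f c.
Hypothesis Hd : cyclic g d.
Variable h : nat -> nat.
Hypothesis Hiso : digraph_iso (extree f c) (extree_edge f c) (extree g d) (extree_edge g d) h.

Lemma extree_iso_root : h c = d.
Proof.
  destruct Hiso as [Hm [Hi [Hs He]]].
  destruct (Nat.eq_dec (h c) d) as [|N]; auto. exfalso.
  assert (Eg : extree g d (g (h c))) by (apply extree_parent; auto using extree_root).
  destruct (Hs _ Eg) as [z [Ez Hz]].
  destruct (proj2 (He c z (extree_root f c Hc) Ez)) as [_ [Hcc _]]; auto.
  repeat split; auto using extree_root.
Qed.

Lemma extree_iso_not_root a : extree f c a -> a <> c -> h a <> d.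
Proof.
  intros E N K. apply N, Hiso; auto using extree_root. rewrite extree_iso_root. exact K.
Qed.

Section Branch.
Variable c' : nat.
Hypothesis Fc' : f c' = c.
Hypothesis Nc' : ~ cyclic f c'.

Lemma extree_iso_branch : g (h c') = d /\ ~ cyclic g (h c').
Proof.
  destruct Hiso as [Hm [Hi [Hs He]]].
  assert (Ec' : extree f c c') by (apply extree_of_tree with c'; auto using tree_root).
  assert (Nec' : c' <> c) by (intros ->; contradiction).
  destruct (proj1 (He c' c Ec' (extree_root f c Hc)) (conj Ec' (conj Nec' (eq_sym Fc')))) as [_ [N E]].
  rewrite extree_iso_root in E. split; [auto |]. apply (extree_not_cyclic g d); auto.
Qed.

Lemma extree_iso_restrict : digraph_iso (tree f c') (tree_edge f c') (tree g (h c')) (tree_edge g (h c')) h.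
Proof.
  destruct extree_iso_branch as [Fd Nd].
  destruct Hiso as [Hm [Hi [Hs He]]].
  assert (TE : forall a, tree f c' a -> extree f c a /\ a <> c)
    by (intros a T; split; [apply extree_of_tree with c'; auto | apply (tree_not_cyclic_root f c c'); auto]).
  assert (TE' : forall b, tree g (h c') b -> extree g d b /\ b <> d)
    by (intros b T; split;
        [apply extree_of_tree with (h c'); auto | apply (tree_not_cyclic_root g d (h c')); auto]).
  assert (ET : forall a, tree f c' a -> tree g (h c') (h a)).
  { intros a T. destruct (TE a T). apply (extree_tree g d); auto. apply extree_iso_not_root; auto. }
  split; [| split; [| split]]; auto.
  - intros a b Ta Tb. apply Hi; apply TE; auto.
  - intros b Tb. destruct (TE' b Tb) as [Eb Nb]. destruct (Hs b Eb) as [a [Ea <-]].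
    exists a. split; auto. apply (extree_tree f c); auto. intros ->. apply Nb, extree_iso_root.
  - intros a b Ta Tb. destruct (TE a Ta) as [Ea Na], (TE b Tb) as [Eb Nb].
    destruct (TE' _ (ET a Ta)) as [Ea' Na'], (TE' _ (ET b Tb)) as [Eb' Nb'].
    destruct (He a b Ea Eb) as [A B]. unfold tree_edge, extree_edge in *. split.
    + intros [_ [_ E]]. destruct (A (conj Ea (conj Na E))) as [_ [_ E']]. auto.
    + intros [_ [_ E]]. destruct (B (conj Ea' (conj Na' E))) as [_ [_ E']]. auto.
Qed.

End Branch.
End ExTreeIso.

Definition extend_root (c d : nat) (k : nat -> nat) (a : nat) : nat := if a =? c then d else k a.

Section ExtendRoot.
Variables f g : nat -> nat.
Hypothesis Hf : is_21_structure f.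
Hypothesis Hg : is_21_structure g.
Variables c d c' d' : nat.
Hypothesis Hc : cyclic f c.
Hypothesis Hd : cyclic g d.
Hypothesis Fc' : f c' = c.
Hypothesis Fd' : g d' = d.
Hypothesis Nc' : ~ cyclic f c'.
Hypothesis Nd' : ~ cyclic g d'.
Variable k : nat -> nat.
Hypothesis Hk : digraph_iso (tree f c') (tree_edge f c') (tree g d') (tree_edge g d') k.

Let h := extend_root c d k.

Lemma extend_root_root : h c = d.
Proof. unfold h, extend_root. rewrite Nat.eqb_refl. reflexivity. Qed.

Lemma extend_root_branch a : a <> c -> h a = k a.
Proof. intros N. unfold h, extend_root. rewrite (proj2 (Nat.eqb_neq a c) N). reflexivity. Qed.

Lemma extend_root_edge_to_root a : extree f c a -> a <> c ->
  (extree_edge f c a c <-> extree_edge g d (h a) d).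
Proof.
  intros Ea Na. pose proof (extree_tree f c c' a Hf Hc Fc' Nc' Ea Na) as Ta.
  rewrite (extend_root_branch a Na). unfold extree_edge. split.
  - intros [_ [_ E]].
    assert (a = c') as -> by (apply (noncyclic_preimage_unique f c); eauto using extree_not_cyclic).
    rewrite (iso_root f g c' d' Nc' k Hk). repeat split; auto.
    + apply extree_of_tree with d'; auto using tree_root.
    + intros ->. auto.
  - intros [Eka [Nka E]]. repeat split; auto.
    assert (k a = d') by (apply (noncyclic_preimage_unique g d); eauto using extree_not_cyclic).
    assert (a = c') as -> by (apply Hk; auto using tree_root; rewrite (iso_root f g c' d' Nc' k Hk); auto).
    auto.
Qed.

Lemma extend_root_iso :
  digraph_iso (extree f c) (extree_edge f c) (extree g d) (extree_edge g d) h.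
Proof.
  destruct Hk as [Km [Ki [Ks Ke]]].
  assert (ET : forall a, extree f c a -> a <> c -> tree f c' a)
    by (intros; apply (extree_tree f c); auto).
  assert (TE' : forall b, tree g d' b -> extree g d b /\ b <> d)
    by (intros b T; split; [apply extree_of_tree with d' | apply (tree_not_cyclic_root g d d')]; auto).
  split; [| split; [| split]].
  - intros a Ea. destruct (Nat.eq_dec a c) as [->|N].
    + rewrite extend_root_root. apply extree_root; auto.
    + rewrite extend_root_branch; auto. apply TE'; auto.
  - intros a b Ea Eb E.
    destruct (Nat.eq_dec a c) as [->|Na], (Nat.eq_dec b c) as [->|Nb]; auto;
      rewrite ?extend_root_root, ?extend_root_branch in E by auto.
    + exfalso. apply (TE' (k b)); auto.
    + exfalso. apply (TE' (k a)); auto.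
    + apply Ki; auto.
  - intros b Eb. destruct (Nat.eq_dec b d) as [->|Nb].
    + exists c. split; [apply extree_root; auto | apply extend_root_root].
    + destruct (Ks b (extree_tree g d d' b Hg Hd Fd' Nd' Eb Nb)) as [a [Ta <-]].
      exists a. split; [apply extree_of_tree with c'; auto |].
      apply extend_root_branch, (tree_not_cyclic_root f c c'); auto.
  - intros a b Ea Eb. destruct (Nat.eq_dec a c) as [->|Na].
    + rewrite extend_root_root. unfold extree_edge. split; intros [_ [X _]]; contradiction.
    + destruct (Nat.eq_dec b c) as [->|Nb].
      * rewrite extend_root_root. apply extend_root_edge_to_root; auto.
      * rewrite !extend_root_branch by auto. unfold extree_edge.
        destruct (Ke a b (ET a Ea Na) (ET b Eb Nb)) as [A B]. unfold tree_edge in A, B. split.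
        -- intros [_ [_ E]]. destruct (A (conj (ET a Ea Na) (conj (ET b Eb Nb) E))) as [_ [_ E']].
           split; [apply TE'; auto | split; [apply TE'; auto | exact E']].
        -- intros [_ [_ E]].
           destruct (B (conj (Km a (ET a Ea Na)) (conj (Km b (ET b Eb Nb)) E))) as [_ [_ E']]. auto.
Qed.

End ExtendRoot.

Lemma extree_no_branch f c a : (forall c', f c' = c -> cyclic f c') -> extree f c a -> a = c.
Proof.
  intros Hall Ea. destruct (Nat.eq_dec a c) as [|N]; auto.
  destruct (extree_branch f c a Ea N) as [c' [Fc' [Nc' _]]]. exfalso. apply Nc', Hall, Fc'.
Qed.

Lemma extree_iso_no_branch f g c d h : cyclic f c -> cyclic g d ->
  digraph_iso (extree f c) (extree_edge f c) (extree g d) (extree_edge g d) h ->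
  (forall c', f c' = c -> cyclic f c') ->
  digraph_iso (extree f c) (extree_edge f c) (extree g d) (extree_edge g d) (fun _ => d).
Proof.
  intros Hc Hd Hiso Hall.
  assert (Hroot : h c = d) by exact (extree_iso_root f g c d Hc Hd h Hiso).
  destruct Hiso as [_ [_ [Hs _]]].
  split; [| split; [| split]].
  - intros. apply extree_root, Hd.
  - intros a b Ea Eb _. rewrite (extree_no_branch f c a), (extree_no_branch f c b); auto.
  - intros b Eb. exists c. split; [apply extree_root, Hc |].
    destruct (Hs b Eb) as [a [Ea <-]]. rewrite (extree_no_branch f c a Hall Ea). auto.
  - intros a b Ea Eb. rewrite (extree_no_branch f c a Hall Ea).
    unfold extree_edge. split; intros [_ [N _]]; contradiction.
Qed.

(** * Partial recursive definitions *)

Definition computable_dom (D : list nat -> Prop) (F : list nat -> nat) : Prop :=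
  exists p, forall xs, D xs -> eval p xs (F xs).

(* A first-order language for partial recursive definitions.  [Var i] is the
   [i]-th entry of the environment; [Rec n b s] iterates [s] [n] times from [b],
   [s] being evaluated in the environment extended by the step index and the
   accumulator; [Min b] is the least [n] for which [b] vanishes in the
   environment extended by [n]; [Cond c a b] is [a] if [c <> 0] and [b]
   otherwise, and needs [a] to be defined only in the first case. *)
Inductive expr : Type :=
| Var : nat -> expr
| Zero : expr
| Succ : expr -> expr
| App : forall (F : list nat -> nat) (D : list nat -> Prop), computable_dom D F -> exprs -> expr
| Rec : expr -> expr -> expr -> expr
| Min : expr -> expr
| Cond : expr -> expr -> expr -> expr
with exprs : Type :=
| enil : exprs
| econs : expr -> exprs -> exprs.

Scheme expr_ind2 := Induction for expr Sort Prop
with exprs_ind2 := Induction for exprs Sort Prop.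

Fixpoint primrec (step : nat -> nat -> nat) (b n : nat) : nat :=
  match n with 0 => b | S i => step i (primrec step b i) end.

Lemma primrec_ext step step' b n :
  (forall i r, step i r = step' i r) -> primrec step b n = primrec step' b n.
Proof. intros H. induction n as [|n IH]; cbn; congruence. Qed.

Fixpoint sem (e : expr) (env : list nat) : nat :=
  match e with
  | Var i => nth i env 0
  | Zero => 0
  | Succ a => S (sem a env)
  | App F _ _ args => F (sems args env)
  | Rec n b s => primrec (fun i r => sem s (i :: r :: env)) (sem b env) (sem n env)
  | Min b => least (fun n => sem b (n :: env) =? 0)
  | Cond c a b => if sem c env =? 0 then sem b env else sem a env
  end
with sems (es : exprs) (env : list nat) : list nat :=
  match es with
  | enil => []
  | econs a r => sem a env :: sems r env
  end.

Fixpoint defined (e : expr) (env : list nat) : Prop :=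
  match e with
  | Var _ | Zero => True
  | Succ a => defined a env
  | App _ D _ args => defineds args env /\ D (sems args env)
  | Rec n b s => defined n env /\ defined b env /\
      forall i, i < sem n env ->
        defined s (i :: primrec (fun i r => sem s (i :: r :: env)) (sem b env) i :: env)
  | Min b => (exists n, sem b (n :: env) = 0) /\ forall m, defined b (m :: env)
  | Cond c a b => defined c env /\ defined b env /\ (sem c env <> 0 -> defined a env)
  end
with defineds (es : exprs) (env : list nat) : Prop :=
  match es with
  | enil => True
  | econs a r => defined a env /\ defineds r env
  end.

Definition projections (shift k : nat) : list prf := map (fun i => PProj (i + shift)) (seq 0 k).

Lemma eval_projections (pre env : list nat) :
  Forall2 (fun p z => eval p (pre ++ env) z) (projections (length pre) (length env)) env.
Proof.
  unfold projections.
  enough (H : forall m j, j + m = length env ->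
    Forall2 (fun p z => eval p (pre ++ env) z)
      (map (fun i => PProj (i + length pre)) (seq j m)) (skipn j env)) by exact (H _ 0 eq_refl).
  induction m as [|m IH]; intros j Hj; cbn.
  - rewrite skipn_all2 by lia. constructor.
  - assert (Hs : skipn j env = nth j env 0 :: skipn (S j) env).
    { clear IH. revert env Hj. induction j as [|j IHj]; intros [|x env] Hj; cbn in *; try lia; auto. }
    rewrite Hs. constructor.
    + replace (nth j env 0) with (nth (j + length pre) (pre ++ env) 0).
      * constructor. rewrite length_app. lia.
      * rewrite app_nth2 by lia. f_equal. lia.
    + apply IH. lia.
Qed.

Lemma eval_push p q env n v : eval p env n -> eval q (n :: env) v ->
  eval (PComp q (p :: projections 0 (length env))) env v.
Proof.
  intros Hp Hq. econstructor; [constructor; [exact Hp | apply (eval_projections [] env)] | exact Hq].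
Qed.

Lemma eval_drop2 q env x y v : eval q env v ->
  eval (PComp q (projections 2 (length env))) (x :: y :: env) v.
Proof. intros Hq. econstructor; [apply (eval_projections [x; y] env) | exact Hq]. Qed.

Lemma eval_prec pb ps env b step n : eval pb env b ->
  (forall i, i < n -> eval ps (i :: primrec step b i :: env) (step i (primrec step b i))) ->
  eval (PPrec pb ps) (n :: env) (primrec step b n).
Proof.
  intros Hb Hs. induction n as [|n IH]; [constructor; exact Hb |].
  econstructor; [apply IH; auto | apply Hs; lia].
Qed.

Lemma eval_min pb env (b : nat -> nat) : (exists n, b n = 0) ->
  (forall m, eval pb (m :: env) (b m)) -> eval (PMu pb) env (least (fun n => b n =? 0)).
Proof.
  intros [n0 Hn0] Hb.
  destruct (least_spec (fun n => b n =? 0)) as [Hleast Hbelow]; [exists n0; rewrite Hn0; reflexivity |].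
  constructor.
  - apply Nat.eqb_eq in Hleast. pose proof (Hb (least (fun n => b n =? 0))) as E.
    rewrite Hleast in E. exact E.
  - intros m Hm. specialize (Hbelow m Hm). apply Nat.eqb_neq in Hbelow.
    destruct (b m) as [|q] eqn:E; [contradiction |]. exists q. rewrite <- E. apply Hb.
Qed.

Lemma primrec_const (x y : nat) m : primrec (fun _ _ => x) y m = if m =? 0 then y else x.
Proof. destruct m; reflexivity. Qed.

Theorem expr_computable e k :
  exists p, forall env, length env = k -> defined e env -> eval p env (sem e env).
Proof.
  revert k.
  apply (expr_ind2
    (fun e => forall k, exists p, forall env,
       length env = k -> defined e env -> eval p env (sem e env))
    (fun es => forall k, exists ps, forall env, length env = k -> defineds es env ->
       Forall2 (fun p z => eval p env z) ps (sems es env))).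
  - intros i k. destruct (lt_dec i k).
    + exists (PProj i). intros env Hl _. constructor. lia.
    + exists PZero. intros env Hl _. cbn. rewrite nth_overflow by lia. constructor.
  - intros k. exists PZero. intros; constructor.
  - intros a IH k. destruct (IH k) as [p Hp]. exists (PComp PSucc [p]).
    intros env Hl Hd. econstructor; [constructor; [apply Hp; auto | constructor] | constructor].
  - intros F D [pF HpF] args IH k. destruct (IH k) as [ps Hps].
    exists (PComp pF ps). intros env Hl [Hd HD]. econstructor; eauto.
  - intros n IHn b IHb s IHs k.
    destruct (IHn k) as [pn Hn], (IHb k) as [pb Hb], (IHs (S (S k))) as [ps Hs].
    exists (PComp (PPrec pb ps) (pn :: projections 0 k)).
    intros env <- [Dn [Db Ds]]. apply eval_push with (sem n env); [auto |].
    apply eval_prec; [auto |]. intros i Hi. apply Hs; [cbn; lia | auto].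
  - intros b IHb k. destruct (IHb (S k)) as [pb Hb]. exists (PMu pb).
    intros env Hl [Hex Db]. apply eval_min; [exact Hex |]. intros m. apply Hb; cbn; auto.
  - intros c IHc a IHa b IHb k.
    destruct (IHc k) as [pc Hc], (IHa k) as [pa Ha], (IHb k) as [pb Hb].
    (* [Cond] is primitive recursion on the value of [c] whose step ignores the accumulator. *)
    exists (PComp (PPrec pb (PComp pa (projections 2 k))) (pc :: projections 0 k)).
    intros env <- [Dc [Db Da]]. apply eval_push with (sem c env); [auto |].
    cbn [sem]. rewrite <- primrec_const. apply eval_prec; [auto |].
    intros i Hi. apply eval_drop2, Ha; [reflexivity | apply Da; lia].
  - intros k. exists []. intros. constructor.
  - intros a IHa r IHr k. destruct (IHa k) as [p Hp], (IHr k) as [ps Hps].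
    exists (p :: ps). intros env Hl [Da Dr]. constructor; auto.
Qed.

Create HintDb defined.

Definition run (e : expr) : list nat -> nat := sem e.
Definition halts (e : expr) : list nat -> Prop := defined e.
Arguments run : simpl never.
Arguments halts : simpl never.

Lemma run_computable e k : computable_dom (fun ys => length ys = k /\ halts e ys) (run e).
Proof. destruct (expr_computable e k) as [p Hp]. exists p. intros ys [Hl Hd]. apply Hp; auto. Qed.

(* [run] and [halts] do not unfold under [cbn], which keeps the terms of compound programs small. *)
Definition call (e : expr) (k : nat) (args : exprs) : expr :=
  App (run e) (fun ys => length ys = k /\ halts e ys) (run_computable e k) args.

Fixpoint es (l : list expr) : exprs :=
  match l with [] => enil | a :: r => econs a (es r) end.

Definition total (e : expr) (k : nat) : Prop := forall ys, length ys = k -> halts e ys.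

Lemma sem_call e k l env : sem (call e k (es l)) env = run e (map (fun a => sem a env) l).
Proof. unfold call. cbn. f_equal. induction l as [|a l IH]; cbn; congruence. Qed.

Lemma defined_call e k l env :
  defined (call e k (es l)) env <->
  Forall (fun a => defined a env) l /\ length l = k /\ halts e (map (fun a => sem a env) l).
Proof.
  assert (Hsems : sems (es l) env = map (fun a => sem a env) l)
    by (induction l as [|a l IH]; cbn; congruence).
  assert (Hdefs : defineds (es l) env <-> Forall (fun a => defined a env) l).
  { clear Hsems. induction l as [|a l IH]; cbn.
    - split; intros; constructor.
    - rewrite IH, Forall_cons_iff. tauto. }
  unfold call. cbn [defined]. rewrite Hsems, Hdefs, length_map. tauto.
Qed.

Lemma defined_call_total e k l env :
  total e k -> length l = k -> Forall (fun a => defined a env) l -> defined (call e k (es l)) env.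
Proof.
  intros He Hl Hd. apply defined_call. repeat split; auto. apply He. rewrite length_map. auto.
Qed.

Ltac total_call H :=
  apply defined_call_total; [apply H | reflexivity |];
  repeat (apply Forall_cons; [auto with defined |]); apply Forall_nil.

Lemma defined_Cond c a b env : defined c env -> defined a env -> defined b env -> defined (Cond c a b) env.
Proof. cbn. auto. Qed.

Lemma sem_Cond c a b env : sem (Cond c a b) env = if sem c env =? 0 then sem b env else sem a env.
Proof. reflexivity. Qed.

#[export] Hint Resolve defined_Cond : defined.
#[export] Hint Extern 1 (defined (Var _) _) => exact I : defined.
#[export] Hint Extern 1 (defined Zero _) => exact I : defined.
#[export] Hint Extern 1 (defined (Succ _) _) => cbn [defined] : defined.

Fixpoint const (n : nat) : expr := match n with 0 => Zero | S m => Succ (const m) end.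

Lemma sem_const n env : sem (const n) env = n.
Proof. induction n; cbn; auto. Qed.

Lemma defined_const n env : defined (const n) env.
Proof. induction n; cbn; auto. Qed.
#[export] Hint Resolve defined_const : defined.

Definition pred_prog := Rec (Var 0) Zero (Var 0).
Definition ePred a := call pred_prog 1 (es [a]).

Lemma sem_ePred a env : sem (ePred a) env = pred (sem a env).
Proof. unfold ePred. rewrite sem_call. unfold run. cbn. destruct (sem a env); reflexivity. Qed.

Lemma total_pred_prog : total pred_prog 1.
Proof. intros ys _. unfold halts. cbn. auto. Qed.

Lemma defined_ePred a env : defined a env -> defined (ePred a) env.
Proof. intros. total_call total_pred_prog. Qed.
#[export] Hint Resolve defined_ePred : defined.

Definition add_prog := Rec (Var 1) (Var 0) (Succ (Var 1)).
Definition eAdd a b := call add_prog 2 (es [a; b]).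

Lemma sem_eAdd a b env : sem (eAdd a b) env = sem a env + sem b env.
Proof. unfold eAdd. rewrite sem_call. unfold run. cbn. induction (sem b env); cbn; lia. Qed.

Lemma total_add_prog : total add_prog 2.
Proof. intros ys _. unfold halts. cbn. auto. Qed.

Lemma defined_eAdd a b env : defined a env -> defined b env -> defined (eAdd a b) env.
Proof. intros. total_call total_add_prog. Qed.
#[export] Hint Resolve defined_eAdd : defined.

Definition sub_prog := Rec (Var 1) (Var 0) (ePred (Var 1)).
Definition eSub a b := call sub_prog 2 (es [a; b]).

Lemma sem_eSub a b env : sem (eSub a b) env = sem a env - sem b env.
Proof.
  unfold eSub. rewrite sem_call. unfold run, sub_prog. cbn [map sem nth].
  generalize (sem a env) (sem b env). intros x y.
  enough (H : forall n, primrec (fun i r => sem (ePred (Var 1)) [i; r; x; y]) x n = x - n) by apply H.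
  induction n as [|n IH]; cbn [primrec]; [lia |]. rewrite sem_ePred. cbn [sem nth]. rewrite IH. lia.
Qed.

Lemma total_sub_prog : total sub_prog 2.
Proof. intros ys _. unfold halts, sub_prog. cbn [defined]. auto with defined. Qed.

Lemma defined_eSub a b env : defined a env -> defined b env -> defined (eSub a b) env.
Proof. intros. total_call total_sub_prog. Qed.
#[export] Hint Resolve defined_eSub : defined.

Definition mul_prog := Rec (Var 1) Zero (eAdd (Var 1) (Var 2)).
Definition eMul a b := call mul_prog 2 (es [a; b]).

Lemma sem_eMul a b env : sem (eMul a b) env = sem a env * sem b env.
Proof.
  unfold eMul. rewrite sem_call. unfold run, mul_prog. cbn [map sem nth].
  generalize (sem a env) (sem b env). intros x y.
  enough (H : forall n, primrec (fun i r => sem (eAdd (Var 1) (Var 2)) [i; r; x; y]) 0 n = x * n)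
    by apply H.
  induction n as [|n IH]; cbn [primrec]; [lia |]. rewrite sem_eAdd. cbn [sem nth]. rewrite IH. lia.
Qed.

Lemma total_mul_prog : total mul_prog 2.
Proof. intros ys _. unfold halts, mul_prog. cbn [defined]. auto with defined. Qed.

Lemma defined_eMul a b env : defined a env -> defined b env -> defined (eMul a b) env.
Proof. intros. total_call total_mul_prog. Qed.
#[export] Hint Resolve defined_eMul : defined.

Definition pow2_prog := Rec (Var 0) (const 1) (eAdd (Var 1) (Var 1)).
Definition ePow2 a := call pow2_prog 1 (es [a]).

Lemma sem_ePow2 a env : sem (ePow2 a) env = 2 ^ sem a env.
Proof.
  unfold ePow2. rewrite sem_call. unfold run, pow2_prog. cbn [map sem nth].
  generalize (sem a env). intros x.
  enough (H : forall n, primrec (fun i r => sem (eAdd (Var 1) (Var 1)) [i; r; x]) (sem (const 1) [x]) n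
                        = 2 ^ n) by apply H.
  induction n as [|n IH]; cbn [primrec]; [apply sem_const |].
  rewrite sem_eAdd. cbn [sem nth]. rewrite IH, Nat.pow_succ_r'. lia.
Qed.

Lemma total_pow2_prog : total pow2_prog 1.
Proof. intros ys _. unfold halts, pow2_prog. cbn [defined]. auto with defined. Qed.

Lemma defined_ePow2 a env : defined a env -> defined (ePow2 a) env.
Proof. intros. total_call total_pow2_prog. Qed.
#[export] Hint Resolve defined_ePow2 : defined.

(* The least [n] with [x < (n + 1) * y], or [0] when [y = 0]. *)
Definition div_body := Cond (Var 2) (eSub (Succ (Var 1)) (eMul (Succ (Var 0)) (Var 2))) Zero.
Definition div_prog := Min div_body.
Definition eDiv a b := call div_prog 2 (es [a; b]).

Lemma sem_div_body n x y : sem div_body [n; x; y] =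
  if y =? 0 then 0 else S x - S n * y.
Proof. unfold div_body. rewrite sem_Cond, sem_eSub, sem_eMul. reflexivity. Qed.

Lemma sem_eDiv a b env : sem (eDiv a b) env = sem a env / sem b env.
Proof.
  unfold eDiv. rewrite sem_call. unfold run, div_prog. cbn [map sem].
  generalize (sem a env) (sem b env). intros x y.
  apply least_unique.
  - rewrite sem_div_body. destruct (Nat.eqb_spec y 0) as [->|Hy]; [reflexivity |].
    apply Nat.eqb_eq. pose proof (Nat.div_mod x y Hy). pose proof (Nat.mod_upper_bound x y Hy). nia.
  - intros m Hm. rewrite sem_div_body. destruct (Nat.eqb_spec y 0) as [->|Hy].
    + cbn in Hm. lia.
    + apply Nat.eqb_neq. pose proof (Nat.div_mod x y Hy). nia.
Qed.

Lemma total_div_prog : total div_prog 2.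
Proof.
  intros [|x [|y []]] Hl; try discriminate. unfold halts, div_prog. cbn [defined]. split.
  - exists x. rewrite sem_div_body. destruct (Nat.eqb_spec y 0); [reflexivity | nia].
  - intros m. unfold div_body. auto with defined.
Qed.

Lemma defined_eDiv a b env : defined a env -> defined b env -> defined (eDiv a b) env.
Proof. intros. total_call total_div_prog. Qed.
#[export] Hint Resolve defined_eDiv : defined.

Definition eMod a b := eSub a (eMul b (eDiv a b)).

Lemma sem_eMod a b env : sem (eMod a b) env = sem a env mod sem b env.
Proof.
  unfold eMod. rewrite sem_eSub, sem_eMul, sem_eDiv.
  destruct (Nat.eqb_spec (sem b env) 0) as [->|Hb]; [cbn; lia |].
  pose proof (Nat.div_mod (sem a env) (sem b env) Hb). lia.
Qed.

Lemma defined_eMod a b env : defined a env -> defined b env -> defined (eMod a b) env.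
Proof. unfold eMod. auto with defined. Qed.
#[export] Hint Resolve defined_eMod : defined.

Definition eNeq a b := eAdd (eSub a b) (eSub b a).

Lemma sem_eNeq a b env : (sem (eNeq a b) env =? 0) = (sem a env =? sem b env).
Proof.
  unfold eNeq. rewrite sem_eAdd, !sem_eSub.
  destruct (Nat.eqb_spec (sem a env) (sem b env)); apply Nat.eqb_eq || apply Nat.eqb_neq; lia.
Qed.

Lemma defined_eNeq a b env : defined a env -> defined b env -> defined (eNeq a b) env.
Proof. unfold eNeq. auto with defined. Qed.
#[export] Hint Resolve defined_eNeq : defined.

Definition eEq a b := Cond (eNeq a b) Zero (const 1).

Lemma sem_eEq a b env : sem (eEq a b) env = Nat.b2n (sem a env =? sem b env).
Proof. unfold eEq. rewrite sem_Cond, sem_eNeq, sem_const. now destruct (_ =? _). Qed.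

Lemma defined_eEq a b env : defined a env -> defined b env -> defined (eEq a b) env.
Proof. unfold eEq. auto with defined. Qed.
#[export] Hint Resolve defined_eEq : defined.

Definition eLt a b := Cond (eSub b a) (const 1) Zero.

Lemma sem_eLt a b env : sem (eLt a b) env = Nat.b2n (sem a env <? sem b env).
Proof.
  unfold eLt. rewrite sem_Cond, sem_eSub, sem_const.
  destruct (Nat.ltb_spec (sem a env) (sem b env)), (Nat.eqb_spec (sem b env - sem a env) 0);
    cbn; lia.
Qed.

Lemma defined_eLt a b env : defined a env -> defined b env -> defined (eLt a b) env.
Proof. unfold eLt. auto with defined. Qed.
#[export] Hint Resolve defined_eLt : defined.

Definition eAnd a b := Cond a b Zero.
Definition eOr a b := Cond a (const 1) b.

Lemma sem_eAnd a b s t env :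
  sem a env = Nat.b2n s -> sem b env = Nat.b2n t -> sem (eAnd a b) env = Nat.b2n (s && t).
Proof. intros Ha Hb. unfold eAnd. rewrite sem_Cond, Ha, Hb. now destruct s. Qed.

Lemma sem_eOr a b s t env :
  sem a env = Nat.b2n s -> sem b env = Nat.b2n t -> sem (eOr a b) env = Nat.b2n (s || t).
Proof. intros Ha Hb. unfold eOr. rewrite sem_Cond, Ha, Hb, sem_const. now destruct s. Qed.

Lemma defined_eAnd a b env : defined a env -> defined b env -> defined (eAnd a b) env.
Proof. unfold eAnd. auto with defined. Qed.

Lemma defined_eOr a b env : defined a env -> defined b env -> defined (eOr a b) env.
Proof. unfold eOr. auto with defined. Qed.
#[export] Hint Resolve defined_eAnd defined_eOr : defined.

Definition eBit s p := eMod (eDiv s (ePow2 p)) (const 2).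

Lemma sem_eBit s p env : sem (eBit s p) env = Nat.b2n (Nat.testbit (sem s env) (sem p env)).
Proof. unfold eBit. rewrite sem_eMod, sem_eDiv, sem_ePow2, sem_const, Nat.testbit_spec'. reflexivity. Qed.

Lemma defined_eBit s p env : defined s env -> defined p env -> defined (eBit s p) env.
Proof. unfold eBit. auto with defined. Qed.
#[export] Hint Resolve defined_eBit : defined.

Fixpoint bitsum (F : nat -> bool) (n : nat) : nat :=
  match n with 0 => 0 | S p => bitsum F p + Nat.b2n (F p) * 2 ^ p end.

Lemma bitsum_lt F n : bitsum F n < 2 ^ n.
Proof.
  induction n as [|n IH]; cbn [bitsum]; [cbn; lia |].
  rewrite Nat.pow_succ_r'. destruct (F n); cbn; lia.
Qed.

Lemma testbit_bitsum F n p : p < n -> Nat.testbit (bitsum F n) p = F p.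
Proof.
  induction n as [|n IH]; intros Hp; [lia |]. cbn [bitsum].
  destruct (Nat.eq_dec p n) as [->|Hne].
  - apply Nat.testbit_unique with (bitsum F n) 0; [apply bitsum_lt | lia].
  - rewrite <- (Nat.mod_pow2_bits_low _ n p) by lia.
    rewrite Nat.Div0.mod_add, Nat.mod_small by apply bitsum_lt. apply IH. lia.
Qed.

(* The body is evaluated with the bit position and the accumulator pushed on the environment. *)
Definition eBitsum n body := Rec n Zero (eAdd (Var 1) (eMul body (ePow2 (Var 0)))).

Lemma sem_eBitsum n body env F :
  (forall p r, sem body (p :: r :: env) = Nat.b2n (F p)) ->
  sem (eBitsum n body) env = bitsum F (sem n env).
Proof.
  intros Hbody. unfold eBitsum. cbn [sem].
  induction (sem n env) as [|m IH]; cbn [primrec bitsum]; [reflexivity |].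
  rewrite sem_eAdd, sem_eMul, sem_ePow2. cbn [sem nth]. rewrite IH, Hbody. reflexivity.
Qed.

Lemma defined_eBitsum n body env :
  defined n env -> (forall p r, defined body (p :: r :: env)) -> defined (eBitsum n body) env.
Proof. intros Hn Hbody. unfold eBitsum. cbn [defined]. repeat split; auto with defined. Qed.

Lemma computable_on_dom D h : computable_on D h ->
  computable_dom (fun ys => exists x, ys = [x] /\ D x) (fun ys => h (hd 0 ys)).
Proof. intros [p Hp]. exists p. intros ys [x [-> Dx]]. apply Hp, Dx. Qed.

Lemma computable_fun_on h : computable_fun h -> computable_on (fun _ => True) h.
Proof. intros [p Hp]. exists p. auto. Qed.

Definition eApply1 D h (Hh : computable_on D h) (a : expr) : expr :=
  App _ _ (computable_on_dom D h Hh) (es [a]).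

Lemma sem_eApply1 D h Hh a env : sem (eApply1 D h Hh a) env = h (sem a env).
Proof. reflexivity. Qed.

Lemma defined_eApply1 D h Hh a env : defined a env -> D (sem a env) -> defined (eApply1 D h Hh a) env.
Proof. intros Ha HD. cbn. split; [tauto | eauto]. Qed.

Lemma defined_eApply1_total h Hh a env :
  defined a env -> defined (eApply1 (fun _ => True) h Hh a) env.
Proof. intros Ha. apply defined_eApply1; auto. Qed.
#[export] Hint Resolve defined_eApply1_total : defined.

Section PreimagePrograms.
Variable f : nat -> nat.
Hypothesis Hf : is_21_structure f.
Hypothesis Hfc : computable_on (fun _ => True) f.
Hypothesis Hbc : computable_on (fun _ => True) (beta f).

Definition eF := eApply1 _ f Hfc.
Definition eBeta := eApply1 _ (beta f) Hbc.

Definition pre1_prog := Min (eNeq (eF (Var 0)) (Var 1)).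
Definition ePre1 a := call pre1_prog 1 (es [a]).

Lemma sem_ePre1 a env : sem (ePre1 a) env = pre1 f (sem a env).
Proof.
  unfold ePre1. rewrite sem_call. unfold run, pre1_prog. cbn [sem map].
  apply least_ext. intros n. rewrite sem_eNeq. reflexivity.
Qed.

Lemma total_pre1_prog : total pre1_prog 1.
Proof.
  intros [|x []] Hl; try discriminate. unfold halts, pre1_prog. cbn [defined]. split.
  - destruct (Hf x) as [[z Hz] _]. exists z.
    apply Nat.eqb_eq. rewrite sem_eNeq. apply Nat.eqb_eq, Hz.
  - intros m. unfold eF. auto with defined.
Qed.

Lemma defined_ePre1 a env : defined a env -> defined (ePre1 a) env.
Proof. intros. total_call total_pre1_prog. Qed.

Definition pre2_body :=
  Cond (eNeq (eBeta (Var 1)) (const 1))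
       (Cond (eNeq (eF (Var 0)) (Var 1)) (const 1) (eEq (Var 0) (ePre1 (Var 1))))
       Zero.
Definition pre2_prog := Min pre2_body.
Definition ePre2 a := call pre2_prog 1 (es [a]).

Lemma sem_pre2_body z x :
  (sem pre2_body [z; x] =? 0) = (beta f x =? 1) || ((f z =? x) && negb (z =? pre1 f x)).
Proof.
  unfold pre2_body. rewrite !sem_Cond, !sem_eNeq, sem_eEq, sem_ePre1, sem_const.
  cbn [sem nth]. unfold eBeta, eF. rewrite !sem_eApply1. cbn [sem nth].
  destruct (beta f x =? 1), (f z =? x), (z =? pre1 f x); reflexivity.
Qed.

Lemma sem_ePre2 a env : sem (ePre2 a) env = pre2 f (sem a env).
Proof.
  unfold ePre2. rewrite sem_call. unfold run, pre2_prog. cbn [sem map].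
  apply least_ext. intros n. apply sem_pre2_body.
Qed.

Lemma total_pre2_prog : total pre2_prog 1.
Proof.
  intros [|x []] Hl; try discriminate. unfold halts, pre2_prog. cbn [defined]. split.
  - destruct (beta_cases f x) as [E|E].
    + exists 0. apply Nat.eqb_eq. rewrite sem_pre2_body, E. reflexivity.
    + exists (pre2 f x). apply Nat.eqb_eq. rewrite sem_pre2_body.
      destruct (beta2_pre2 f x E) as [A N]. rewrite A, Nat.eqb_refl, (proj2 (Nat.eqb_neq _ _) N).
      apply orb_true_r.
  - intros m. unfold pre2_body, eBeta, eF. auto 10 using defined_ePre1 with defined.
Qed.

Lemma defined_ePre2 a env : defined a env -> defined (ePre2 a) env.
Proof. intros. total_call total_pre2_prog. Qed.

End PreimagePrograms.

#[export] Hint Resolve defined_ePre1 defined_ePre2 : defined.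

(* The square [B * B] table of booleans, indexed by [a * B + b], is coded by the bits of [r]. *)
Definition lookup (r B a b : nat) : bool :=
  if (a <? B) && (b <? B) then Nat.testbit r (a * B + b) else true.

Definition eLookup r B a b :=
  Cond (eAnd (eLt a B) (eLt b B)) (eBit r (eAdd (eMul a B) b)) (const 1).

Lemma sem_eLookup r B a b env :
  sem (eLookup r B a b) env = Nat.b2n (lookup (sem r env) (sem B env) (sem a env) (sem b env)).
Proof.
  unfold eLookup, lookup. rewrite sem_Cond, (sem_eAnd _ _ (sem a env <? sem B env) (sem b env <? sem B env))
    by apply sem_eLt.
  rewrite sem_eBit, sem_eAdd, sem_eMul, sem_const.
  destruct ((sem a env <? sem B env) && (sem b env <? sem B env)); reflexivity.
Qed.

Lemma defined_eLookup r B a b env :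
  defined r env -> defined B env -> defined a env -> defined b env -> defined (eLookup r B a b) env.
Proof. unfold eLookup. auto 10 with defined. Qed.
#[export] Hint Resolve defined_eLookup : defined.

Definition table (f g : nat -> nat) (B : nat) : nat -> nat :=
  primrec (fun _ r => bitsum (fun p => iso_step f g (lookup r B) (p / B) (p mod B)) (B * B))
          (bitsum (fun _ => true) (B * B)).

Lemma table_spec f g B j a b : lookup (table f g B j) B a b = iso_table f g B j a b.
Proof.
  revert a b. induction j as [|j IH]; intros a b; unfold lookup at 1;
    destruct ((a <? B) && (b <? B)) eqn:Hab; cbn [iso_table]; rewrite ?Hab; try reflexivity;
    apply andb_true_iff in Hab as [Ha Hb]; apply Nat.ltb_lt in Ha, Hb; unfold table; cbn [primrec].
  - apply testbit_bitsum. nia.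
  - fold (table f g B j). rewrite testbit_bitsum by nia.
    rewrite Nat.div_add_l, Nat.div_small, Nat.add_0_r, Nat.add_comm, Nat.Div0.mod_add, Nat.mod_small
      by lia.
    f_equal. do 2 (apply functional_extensionality; intro). apply IH.
Qed.

Section ChooserProgram.
Variables f g : nat -> nat.
Hypothesis Hf : is_21_structure f.
Hypothesis Hg : is_21_structure g.
Hypothesis Hfc : computable_on (fun _ => True) f.
Hypothesis Hgc : computable_on (fun _ => True) g.
Hypothesis Hbf : computable_on (fun _ => True) (beta f).
Hypothesis Hbg : computable_on (fun _ => True) (beta g).
Hypothesis Hisof : computable_on (split_hair f) (iso_fun f).

Local Notation eBf := (eBeta f Hbf).
Local Notation eBg := (eBeta g Hbg).
Local Notation ePre1f := (ePre1 f Hfc).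
Local Notation ePre2f := (ePre2 f Hfc Hbf).
Local Notation ePre1g := (ePre1 g Hgc).
Local Notation ePre2g := (ePre2 g Hgc Hbg).

(* Environment [u; v; B; r]: one step of [iso_table] for the pair [(u, v)], the previous level being
   coded by [r]. *)
Definition iso_step_prog :=
  let L x y := eLookup (Var 3) (Var 2) x y in
  eAnd (eEq (eBf (Var 0)) (eBg (Var 1)))
       (Cond (eEq (eBf (Var 0)) (const 1))
             (L (ePre1f (Var 0)) (ePre1g (Var 1)))
             (eOr (eAnd (L (ePre1f (Var 0)) (ePre1g (Var 1))) (L (ePre2f (Var 0)) (ePre2g (Var 1))))
                  (eAnd (L (ePre1f (Var 0)) (ePre2g (Var 1))) (L (ePre2f (Var 0)) (ePre1g (Var 1)))))).

Lemma run_iso_step_prog u v B r : run iso_step_prog [u; v; B; r] = Nat.b2n (iso_step f g (lookup r B) u v).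
Proof.
  unfold run, iso_step_prog, iso_step, eBeta.
  rewrite (sem_eAnd _ _ (beta f u =? beta g v)
             (if beta f u =? 1 then lookup r B (pre1 f u) (pre1 g v)
              else (lookup r B (pre1 f u) (pre1 g v) && lookup r B (pre2 f u) (pre2 g v)) ||
                   (lookup r B (pre1 f u) (pre2 g v) && lookup r B (pre2 f u) (pre1 g v)))).
  - reflexivity.
  - rewrite sem_eEq, !sem_eApply1. reflexivity.
  - rewrite sem_Cond, sem_eEq, sem_eApply1, sem_const. cbn [sem nth].
    destruct (beta f u =? 1); cbn [Nat.b2n Nat.eqb].
    + rewrite sem_eLookup, sem_ePre1, sem_ePre1. reflexivity.
    + erewrite sem_eOr; [reflexivity | |]; (erewrite sem_eAnd; [reflexivity | |]);
        rewrite sem_eLookup, ?sem_ePre1, ?sem_ePre2; reflexivity.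
Qed.

Lemma total_iso_step_prog : total iso_step_prog 4.
Proof. intros ys _. unfold halts, iso_step_prog, eBeta. auto 20 with defined. Qed.

(* Environment [B; j]: the code of the table of [iso_table f g B j]. *)
Definition table_prog :=
  Rec (Var 1) (eBitsum (eMul (Var 0) (Var 0)) (const 1))
      (eBitsum (eMul (Var 2) (Var 2))
         (call iso_step_prog 4 (es [eDiv (Var 0) (Var 4); eMod (Var 0) (Var 4); Var 4; Var 3]))).

Lemma run_table_prog B j : run table_prog [B; j] = table f g B j.
Proof.
  unfold run, table_prog, table. cbn [sem nth].
  rewrite (sem_eBitsum _ _ _ (fun _ => true)) by (intros; apply sem_const).
  rewrite sem_eMul. cbn [sem nth]. apply primrec_ext. intros i r.
  rewrite (sem_eBitsum _ _ _ (fun p => iso_step f g (lookup r B) (p / B) (p mod B))).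
  - rewrite sem_eMul. reflexivity.
  - intros p acc. rewrite sem_call. cbn [map]. rewrite sem_eDiv, sem_eMod. cbn [sem nth].
    apply run_iso_step_prog.
Qed.

Lemma total_table_prog : total table_prog 2.
Proof.
  intros ys _. unfold halts, table_prog. cbn [defined]. split; [exact I |]. split.
  - apply defined_eBitsum; auto with defined.
  - intros i _. apply defined_eBitsum; [auto with defined |]. intros p r. total_call total_iso_step_prog.
Qed.

Definition eIsoTable B n u v := eLookup (call table_prog 2 (es [B; n])) B u v.

Lemma sem_eIsoTable B n u v env :
  sem (eIsoTable B n u v) env = Nat.b2n (iso_table f g (sem B env) (sem n env) (sem u env) (sem v env)).
Proof.
  unfold eIsoTable. rewrite sem_eLookup, sem_call. cbn [map]. rewrite run_table_prog, table_spec.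
  reflexivity.
Qed.

Lemma defined_eIsoTable B n u v env :
  defined B env -> defined n env -> defined u env -> defined v env -> defined (eIsoTable B n u v) env.
Proof. intros. unfold eIsoTable. apply defined_eLookup; auto. total_call total_table_prog. Qed.
#[local] Hint Resolve defined_eIsoTable : defined.

Definition search_body :=
  eAnd (eIsoTable (Var 0) (Var 0) (ePre1f (Var 1)) (ePre1g (Var 2)))
       (eIsoTable (Var 0) (Var 0) (ePre1f (Var 1)) (ePre2g (Var 2))).
Definition search_prog := Min search_body.

Lemma sem_search_body m x y : (sem search_body [m; x; y] =? 0) = separating_depth f g x y m.
Proof.
  unfold search_body, separating_depth. erewrite sem_eAnd by apply sem_eIsoTable.
  rewrite !sem_ePre1, sem_ePre2. cbn [sem nth].
  destruct (iso_table _ _ _ _ _ _), (iso_table _ _ _ _ _ _); reflexivity.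
Qed.

Lemma run_search_prog x y : run search_prog [x; y] = search f g x y.
Proof. unfold run, search_prog, search. cbn [sem]. apply least_ext. intros. apply sem_search_body. Qed.

Lemma halts_search_prog x y : (exists m, separating_depth f g x y m = true) -> halts search_prog [x; y].
Proof.
  intros [m Hm]. unfold halts, search_prog. cbn [defined]. split.
  - exists m. apply Nat.eqb_eq. rewrite sem_search_body. exact Hm.
  - intros. unfold search_body. auto 10 with defined.
Qed.

(* Environment [x; y; x']. *)
Definition straight_prog := Cond (eNeq (Var 2) (ePre1f (Var 0))) (ePre2g (Var 1)) (ePre1g (Var 1)).
Definition cross_prog := Cond (eNeq (Var 2) (ePre1f (Var 0))) (ePre1g (Var 1)) (ePre2g (Var 1)).
Definition search_xy := call search_prog 2 (es [Var 0; Var 1]).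
Definition chooser_prog :=
  Cond (eEq (eBf (Var 0)) (const 2))
       (Cond (eEq (eApply1 _ _ Hisof (Var 0)) Zero)
             (Cond (eIsoTable search_xy search_xy (ePre1f (Var 0)) (ePre1g (Var 1)))
                   straight_prog cross_prog)
             straight_prog)
       (ePre1g (Var 1)).

Lemma sem_straight_prog x y x' : sem straight_prog [x; y; x'] = match_straight f g x y x'.
Proof.
  unfold straight_prog, match_straight. rewrite sem_Cond, sem_eNeq, sem_ePre1, sem_ePre1, sem_ePre2.
  cbn [sem nth]. destruct (x' =? pre1 f x); reflexivity.
Qed.

Lemma sem_cross_prog x y x' : sem cross_prog [x; y; x'] = match_cross f g x y x'.
Proof.
  unfold cross_prog, match_cross. rewrite sem_Cond, sem_eNeq, sem_ePre1, sem_ePre1, sem_ePre2.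
  cbn [sem nth]. destruct (x' =? pre1 f x); reflexivity.
Qed.

Lemma run_chooser_prog x y x' : run chooser_prog [x; y; x'] = computable_chooser f g x y x'.
Proof.
  unfold run, chooser_prog, computable_chooser. rewrite !sem_Cond, !sem_eEq, sem_eIsoTable.
  unfold eBeta, search_xy. rewrite !sem_eApply1, !sem_call, !sem_const, sem_ePre1, sem_ePre1.
  cbn [sem nth map]. rewrite run_search_prog, sem_straight_prog, sem_cross_prog.
  destruct (beta f x =? 2), (iso_fun f x =? 0), (iso_table _ _ _ _ _ _); reflexivity.
Qed.

Lemma halts_chooser_prog x y x' :
  (beta f x = 2 -> iso_fun f x = 0 -> exists m, separating_depth f g x y m = true) ->
  halts chooser_prog [x; y; x'].
Proof.
  intros Hsep. unfold halts, chooser_prog. cbn [defined].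
  split; [unfold eBeta; auto with defined |]. split; [auto with defined |].
  intros Hb. unfold eBeta in Hb. rewrite sem_eEq, sem_eApply1, sem_const in Hb. cbn [sem nth] in Hb.
  destruct (Nat.eqb_spec (beta f x) 2) as [B2|]; [| contradiction].
  assert (Hstraight : defined straight_prog [x; y; x']) by (unfold straight_prog; auto with defined).
  split; [apply defined_eEq; [apply defined_eApply1; [exact I | exact B2] | exact I] |].
  split; [exact Hstraight |].
  intros Hiso. rewrite sem_eEq, sem_eApply1 in Hiso. cbn [sem nth] in Hiso.
  assert (Hsearch : defined search_xy [x; y; x']).
  { apply defined_call. split; [repeat constructor |]. split; [reflexivity |].
    apply halts_search_prog, Hsep; [exact B2 |].
    apply Nat.eqb_eq. destruct (iso_fun f x =? 0); cbn in *; congruence. }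
  assert (Hcross : defined cross_prog [x; y; x']) by (unfold cross_prog; auto with defined).
  split; [| split]; auto with defined.
Qed.

End ChooserProgram.

Section TopDownProgram.
Variables f g : nat -> nat.
Hypothesis Hf : is_21_structure f.
Hypothesis Hg : is_21_structure g.
Hypothesis Hfc : computable_on (fun _ => True) f.
Hypothesis Hgc : computable_on (fun _ => True) g.
Hypothesis Hbf : computable_on (fun _ => True) (beta f).
Hypothesis Hbg : computable_on (fun _ => True) (beta g).
Hypothesis Hisof : computable_on (split_hair f) (iso_fun f).

Definition iter_prog := Rec (Var 0) (Var 1) (eF f Hfc (Var 1)).
Definition eIter n a := call iter_prog 2 (es [n; a]).

Lemma sem_eIter n a env : sem (eIter n a) env = Nat.iter (sem n env) f (sem a env).
Proof.
  unfold eIter. rewrite sem_call. unfold run, iter_prog. cbn [sem map nth].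
  generalize (sem n env) (sem a env). intros m x.
  enough (H : forall k, primrec (fun i r => sem (eF f Hfc (Var 1)) [i; r; m; x]) x k = Nat.iter k f x)
    by apply H.
  induction k as [|k IH]; cbn [primrec]; [reflexivity |]. rewrite IH. reflexivity.
Qed.

Lemma total_iter_prog : total iter_prog 2.
Proof. intros ys _. unfold halts, iter_prog, eF. cbn [defined]. auto with defined. Qed.

Lemma defined_eIter n a env : defined n env -> defined a env -> defined (eIter n a) env.
Proof. intros. total_call total_iter_prog. Qed.
#[local] Hint Resolve defined_eIter : defined.

Variables a0 b0 : nat.
Hypothesis Ha0 : ~ cyclic f a0.
Hypothesis R0 : fin_iso f g a0 b0.

Local Notation top_down_map := (top_down f a0 b0 (computable_chooser f g)).

(* Environment [i; r; d; a]: step [i] of the walk from [a0] down to [a], which lies at depth [d];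
   [r] is the image of [Nat.iter (d - i) f a]. *)
Definition walk_step_prog :=
  call (chooser_prog f g Hfc Hgc Hbf Hbg Hisof) 3
    (es [eIter (eSub (Var 2) (Var 0)) (Var 3); Var 1;
         eIter (eSub (eSub (Var 2) (Var 0)) (const 1)) (Var 3)]).
Definition walk_prog := Rec (Var 0) (const b0) walk_step_prog.
Definition depth_prog := Min (eNeq (eIter (Var 0) (Var 1)) (const a0)).
Definition top_down_prog := call walk_prog 2 (es [depth_prog; Var 0]).

Definition walk_step (d a i r : nat) : nat :=
  computable_chooser f g (Nat.iter (d - i) f a) r (Nat.iter (d - i - 1) f a).

Lemma sem_walk_step_prog i r d a : sem walk_step_prog [i; r; d; a] = walk_step d a i r.
Proof.
  unfold walk_step_prog. rewrite sem_call. cbn [map]. rewrite !sem_eIter, !sem_eSub, sem_const.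
  cbn [sem nth]. apply run_chooser_prog.
Qed.

Lemma primrec_walk_step d a i : i <= d ->
  primrec (walk_step d a) b0 i = walk f b0 (computable_chooser f g) i (Nat.iter (d - i) f a).
Proof.
  induction i as [|i IH]; intros Hi; cbn [primrec walk]; [reflexivity |].
  rewrite IH by lia. unfold walk_step.
  replace (d - i) with (S (d - S i)) by lia. rewrite Nat.iter_succ.
  replace (S (d - S i) - 1) with (d - S i) by lia. reflexivity.
Qed.

Lemma sem_depth_prog a : sem depth_prog [a] = depth f a0 a.
Proof.
  unfold depth_prog, depth. cbn [sem]. apply least_ext. intros n.
  rewrite sem_eNeq, sem_eIter, sem_const. reflexivity.
Qed.

Lemma sem_top_down_prog a : sem top_down_prog [a] = top_down_map a.
Proof.
  unfold top_down_prog. rewrite sem_call. cbn [map]. rewrite sem_depth_prog. cbn [sem nth].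
  unfold run, walk_prog. cbn [sem nth]. rewrite sem_const.
  rewrite (primrec_ext _ (walk_step (depth f a0 a) a)) by (intros; apply sem_walk_step_prog).
  rewrite primrec_walk_step, Nat.sub_diag by lia. reflexivity.
Qed.

Lemma defined_walk_step_prog d a i : tree f a0 a -> depth f a0 a = d -> i < d ->
  defined walk_step_prog [i; primrec (walk_step d a) b0 i; d; a].
Proof.
  intros [n Hn] Hd Hi. rewrite (depth_spec f a0 Ha0 a n Hn) in Hd. subst n.
  rewrite primrec_walk_step by lia. set (x := Nat.iter (d - i) f a).
  assert (Hx : Nat.iter i f x = a0)
    by (unfold x; rewrite <- Nat.iter_add; replace (i + (d - i)) with d by lia; exact Hn).
  assert (Rx : fin_iso f g x (walk f b0 (computable_chooser f g) i x)).
  { pose proof (good_chooser_fin_iso f g Hf Hg _ (computable_chooser_good f g Hf) a0 b0 x Ha0 R0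
                  (ex_intro _ i Hx)) as Hmatched.
    unfold top_down in Hmatched. rewrite (depth_spec f a0 Ha0 x i Hx) in Hmatched. exact Hmatched. }
  unfold walk_step_prog. rewrite defined_call.
  split; [repeat (apply Forall_cons; [auto with defined |]); apply Forall_nil |].
  split; [reflexivity |]. cbn [map]. rewrite !sem_eIter, !sem_eSub, sem_const. cbn [sem nth]. fold x.
  apply halts_chooser_prog; auto. intros B2 I0. apply separating_depth_exists; auto.
  apply (tree_not_cyclic f a0); [exact Ha0 | exists i; exact Hx].
Qed.

Lemma defined_top_down_prog a : tree f a0 a -> defined top_down_prog [a].
Proof.
  intros Ta. unfold top_down_prog. apply defined_call. split; [| split; [reflexivity |]].
  - repeat apply Forall_cons; [| exact I | apply Forall_nil]. unfold depth_prog. cbn [defined].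
    split; [| intros; auto with defined].
    destruct Ta as [n Hn]. exists n. apply Nat.eqb_eq. rewrite sem_eNeq, sem_eIter, sem_const.
    apply Nat.eqb_eq, Hn.
  - cbn [map]. rewrite sem_depth_prog. cbn [sem nth]. unfold halts, walk_prog. cbn [defined].
    split; [exact I |]. split; [apply defined_const |]. intros i Hi. cbn [sem nth] in Hi.
    rewrite sem_const, (primrec_ext _ (walk_step (depth f a0 a) a)) by (intros; apply sem_walk_step_prog).
    apply defined_walk_step_prog; auto.
Qed.

Lemma top_down_prog_computable :
  exists e, forall a, tree f a0 a -> eval e [a] (top_down_map a).
Proof.
  destruct (expr_computable top_down_prog 1) as [p Hp]. exists p. intros a Ta.
  rewrite <- sem_top_down_prog. apply Hp; auto using defined_top_down_prog.
Qed.

End TopDownProgram.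

Lemma extend_root_computable f c d c' k e : is_21_structure f -> cyclic f c -> f c' = c ->
  ~ cyclic f c' -> (forall a, tree f c' a -> eval e [a] (k a)) ->
  exists p, forall a, extree f c a -> eval p [a] (extend_root c d k a).
Proof.
  intros Hf Hc Fc' Nc' He.
  assert (Hk : computable_on (tree f c') k) by (exists e; exact He).
  set (prog := Cond (eNeq (Var 0) (const c)) (eApply1 _ k Hk (Var 0)) (const d)).
  destruct (expr_computable prog 1) as [p Hp]. exists p. intros a Ea.
  replace (extend_root c d k a) with (sem prog [a]).
  - apply Hp; [reflexivity |]. unfold prog. cbn [defined].
    split; [auto with defined |]. split; [apply defined_const |].
    intros Hne. apply Nat.eqb_neq in Hne. rewrite sem_eNeq, sem_const in Hne. cbn [sem nth] in Hne.
    apply defined_eApply1; [exact I |]. cbn [sem nth].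
    apply (extree_tree f c); auto. apply Nat.eqb_neq, Hne.
  - unfold prog, extend_root. rewrite sem_Cond, sem_eNeq, !sem_const, sem_eApply1. cbn [sem nth].
    destruct (a =? c); reflexivity.
Qed.

Theorem Tree_iso_computable f g a0 b0 :
  computable_21 f -> computable_21 g -> computable_fun (beta f) -> computable_fun (beta g) ->
  computable_on (split_hair f) (iso_fun f) ->
  ~ cyclic f a0 -> ~ cyclic g b0 -> Tree_iso f g a0 b0 ->
  exists (e : prf) (h : nat -> nat), (forall a, tree f a0 a -> eval e [a] (h a)) /\
    digraph_iso (tree f a0) (tree_edge f a0) (tree g b0) (tree_edge g b0) h.
Proof.
  intros [Hf Hfc] [Hg Hgc] Hbf Hbg Hiso Ha0 Hb0 T.
  pose proof (Tree_iso_fin_iso f g a0 b0 Hf Hg Ha0 T) as R0.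
  destruct (top_down_prog_computable f g Hf Hg (computable_fun_on _ Hfc) (computable_fun_on _ Hgc)
              (computable_fun_on _ Hbf) (computable_fun_on _ Hbg) Hiso a0 b0 Ha0 R0) as [e He].
  exists e, (top_down f a0 b0 (computable_chooser f g)). split; [exact He |].
  apply good_chooser_iso; auto using computable_chooser_good.
Qed.

Theorem exTree_iso_computable f g c d :
  computable_21 f -> computable_21 g -> computable_fun (beta f) -> computable_fun (beta g) ->
  computable_on (split_hair f) (iso_fun f) ->
  cyclic f c -> cyclic g d -> exTree_iso f g c d ->
  exists (e : prf) (h : nat -> nat), (forall a, extree f c a -> eval e [a] (h a)) /\
    digraph_iso (extree f c) (extree_edge f c) (extree g d) (extree_edge g d) h.
Proof.
  intros hA hB Hbf Hbg Hiso_f Hc Hd [h Hiso]. pose proof (proj1 hA) as Hf. pose proof (proj1 hB) as Hg.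
  destruct (classic (exists c', f c' = c /\ ~ cyclic f c')) as [[c' [Fc' Nc']] | Hnone].
  - destruct (extree_iso_branch f g c d Hc Hd h Hiso c' Fc' Nc') as [Fd' Nd'].
    pose proof (extree_iso_restrict f g Hf Hg c d Hc Hd h Hiso c' Fc' Nc') as Hrestrict.
    destruct (Tree_iso_computable f g c' (h c') hA hB Hbf Hbg Hiso_f Nc' Nd' (ex_intro _ h Hrestrict))
      as [e [k [He Hk]]].
    destruct (extend_root_computable f c d c' k e Hf Hc Fc' Nc' He) as [p Hp].
    exists p, (extend_root c d k). split; [exact Hp |].
    apply (extend_root_iso f g Hf Hg c d c' (h c')); auto.
  - destruct (expr_computable (const d) 1) as [p Hp].
    exists p, (fun _ => d). split.
    + intros a _. rewrite <- (sem_const d [a]). apply Hp; auto using defined_const.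
    + apply (extree_iso_no_branch f g c d h); auto.
      intros c' Fc'. apply NNPP. intros Nc'. eauto.
Qed.

Theorem lemma2p9 (f g : nat -> nat)
  (hA : computable_21 f) (hB : computable_21 g)
  (hAB : struct_isomorphic f g)
  (hbA : computable_fun (beta f)) (hbB : computable_fun (beta g))
  (hiA : computable_on (split_hair f) (iso_fun f))
  (hiB : computable_on (split_hair g) (iso_fun g)) :
  (forall a0 b0 : nat, ~ cyclic f a0 -> ~ cyclic g b0 ->
     Tree_iso f g a0 b0 ->
     exists (e : prf) (h : nat -> nat),
       (forall a, tree f a0 a -> eval e [a] (h a)) /\
       digraph_iso (tree f a0) (tree_edge f a0) (tree g b0) (tree_edge g b0) h)
  /\
  (forall c d : nat, cyclic f c -> cyclic g d ->
     exTree_iso f g c d ->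
     exists (e : prf) (h : nat -> nat),
       (forall a, extree f c a -> eval e [a] (h a)) /\
       digraph_iso (extree f c) (extree_edge f c) (extree g d) (extree_edge g d) h).
Proof.
  split; intros.
  - apply Tree_iso_computable; auto.
  - apply exTree_iso_computable; auto.
Qed.
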